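(* For each $a\in[0,1)$, the set $[(a,0)]=\{H_\varphi(a,0):\varphi\in\mathrm{Aut}(\mathbb{D})\}$ is a closed, path-connected subset of $\mathbb{G}$.
   Context: $\mathbb{D}$ is the open unit disc in $\mathbb{C}$ and $\mathrm{Aut}(\mathbb{D})$ its group of holomorphic automorphisms. The symmetrized bidisc is $\mathbb{G}=\{(z_1+z_2,z_1z_2): z_1,z_2\in\mathbb{D}\}\subset\mathbb{C}^2$. For $\varphi\in\mathrm{Aut}(\mathbb{D})$, $H_\varphi:\mathbb{G}\to\mathbb{G}$ is defined by $H_\varphi(z_1+z_2,z_1z_2)=(\varphi(z_1)+\varphi(z_2),\varphi(z_1)\varphi(z_2))$. ''Closed'' means closed in the relative topology of $\mathbb{G}$. *)

From Stdlib Require Import Reals.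
From Coquelicot Require Import Coquelicot.
Open Scope R_scope.

Definition inD (z : C) : Prop := Cmod z < 1.

Definition holo_on_D (f : C -> C) : Prop :=
  forall z : C, inD z -> @ex_derive C_AbsRing C_NormedModule f z.

Definition AutD (phi : C -> C) : Prop :=
  holo_on_D phi /\ (forall z, inD z -> inD (phi z)) /\
  exists psi : C -> C,
    holo_on_D psi /\ (forall z, inD z -> inD (psi z)) /\
    (forall z, inD z -> psi (phi z) = z) /\
    (forall w, inD w -> phi (psi w) = w).

Definition C2 : UniformSpace := prod_UniformSpace C_UniformSpace C_UniformSpace.

Definition inG (x : C2) : Prop :=
  exists z1 z2 : C, inD z1 /\ inD z2 /\ x = ((z1 + z2)%C, (z1 * z2)%C).

Definition Hphi (phi : C -> C) (x y : C2) : Prop :=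
  exists z1 z2 : C, inD z1 /\ inD z2 /\ x = ((z1 + z2)%C, (z1 * z2)%C) /\
    y = ((phi z1 + phi z2)%C, (phi z1 * phi z2)%C).

Definition orbit_a0 (a : R) (y : C2) : Prop :=
  exists phi, AutD phi /\ Hphi phi (RtoC a, RtoC 0) y.

Definition rel_closed_in_G (S : C2 -> Prop) : Prop :=
  (forall y, S y -> inG y) /\
  exists F : C2 -> Prop, closed F /\ forall y, S y <-> (F y /\ inG y).

Definition path_connected (S : C2 -> Prop) : Prop :=
  forall x y, S x -> S y ->
  exists g : R -> C2,
    (forall t, 0 <= t <= 1 ->
       filterlim g (within (fun s => 0 <= s <= 1) (locally t)) (locally (g t))) /\
    (forall t, 0 <= t <= 1 -> S (g t)) /\ g 0 = x /\ g 1 = y.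

(* An automorphism [phi] of D maps [(a, 0) = (a + 0, a * 0)] to [(u + v, u v)]
   with [u = phi a] and [v = phi 0]. The Schwarz lemma, applied to
   [mobius v o phi] and to [phi^-1 o mobius (- v)], where
   [mobius v z = (z - v) / (1 - conj v z)], gives [|mobius v u| = a]; conversely
   every such pair is reached by [z |-> mobius (- v) (lam z)] with [|lam| = 1].
   So the orbit is [{(u + v, u v) : u, v in D, |mobius v u| = a}]. This set is
   the zero set in G of a continuous function of [(u + v, u v)], hence closed,
   and it is path-connected: move [v] along a segment and [mobius v u] along
   the circle of radius [a].

   The Schwarz lemma is derived from Goursat's theorem for rectangles (proved
   by bisection, allowing one point where the integrand is only continuous),
   applied in logarithmic coordinates [z = exp w]: for [0 < x < r < 1] the
   integral over [|z| = r] of [(x F(z) / z - F(x)) / |z - x|^2] vanishes, and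
   since the weight [1 / |z - x|^2] is positive this gives [|F x| <= x / r]. *)

From Stdlib Require Import Reals Lra Lia Psatz ClassicalEpsilon Classical.
From Coquelicot Require Import Coquelicot.
Open Scope R_scope.

Notation is_Cderive f z l := (@is_derive C_AbsRing C_NormedModule f z l).

Definition Ccontinuous_at (f : C -> C) (z : C) : Prop :=
  forall eps, 0 < eps -> exists delta, 0 < delta /\
    forall w, Cmod (w - z) < delta -> Cmod (f w - f z) < eps.

Lemma Cmod_reverse_triangle (a b : C) : Cmod a - Cmod b <= Cmod (a - b).
Proof.
  assert (Cmod a <= Cmod (a - b) + Cmod b).
  { replace a with ((a - b) + b)%C at 1 by ring. apply Cmod_triangle. }
  lra.
Qed.

Lemma Cmod_minus_sym (a b : C) : Cmod (a - b) = Cmod (b - a).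
Proof. replace (a - b)%C with (- (b - a))%C by ring. apply Cmod_opp. Qed.

Lemma Cmod_pair_le (a b : R) : Cmod (a, b) <= Rabs a + Rabs b.
Proof.
  unfold Cmod; simpl. apply Rsqr_incr_0_var.
  2: { pose proof (Rabs_pos a); pose proof (Rabs_pos b); lra. }
  rewrite Rsqr_sqrt by nra. unfold Rsqr.
  pose proof (Rabs_pos a); pose proof (Rabs_pos b).
  assert (a * a = Rabs a * Rabs a) by (rewrite <- Rabs_mult, Rabs_right; nra).
  assert (b * b = Rabs b * Rabs b) by (rewrite <- Rabs_mult, Rabs_right; nra).
  nra.
Qed.

Lemma Cmod_pair (a b : R) : Cmod (a, b) = sqrt (a * a + b * b).
Proof. unfold Cmod; simpl. f_equal; ring. Qed.

Lemma snd_le_Cmod (z : C) : Rabs (snd z) <= Cmod z.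
Proof. eapply Rle_trans; [apply Rmax_r | apply Rmax_Cmod]. Qed.

(** * Complex derivatives *)

Lemma is_Cderive_AbsRing (f : C -> C) (z l : C) :
  is_Cderive f z l <-> @is_derive C_AbsRing (AbsRing_NormedModule C_AbsRing) f z l.
Proof.
  split; intros [_ Hd]; (split; [apply is_linear_scal_l |]); intros x Hx eps; exact (Hd x Hx eps).
Qed.

Lemma is_Cderive_eps (f : C -> C) (z l : C) :
  is_Cderive f z l <->
  forall eps, 0 < eps -> exists delta, 0 < delta /\
    forall w, Cmod (w - z) < delta -> Cmod (f w - f z - l * (w - z)) <= eps * Cmod (w - z).
Proof.
  assert (E : forall w, (f w - f z - l * (w - z))%C = minus (minus (f w) (f z)) (scal (minus w z) l)).
  { intros w. unfold minus, plus, opp, scal; simpl. change (mult (w + - z)%C l) with ((w + - z) * l)%C. ring. }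
  split.
  - intros [_ Hd] eps Heps.
    destruct (Hd z (fun P H => H) (mkposreal eps Heps)) as [d Hw].
    exists d; split; [apply cond_pos |]. intros w Hwz. rewrite E. exact (Hw w Hwz).
  - intros Hc. split; [apply is_linear_scal_l |].
    intros x Hx. apply (@is_filter_lim_locally_unique _ (AbsRing_NormedModule C_AbsRing)) in Hx. subst x.
    intros eps. destruct (Hc eps (cond_pos eps)) as [d [Hd H]].
    exists (mkposreal d Hd). intros w Hw. rewrite <- E. exact (H w Hw).
Qed.

Lemma is_Cderive_const (c z : C) : is_Cderive (fun _ => c) z (RtoC 0).
Proof. exact (is_derive_const c z). Qed.

Lemma is_Cderive_id (z : C) : is_Cderive (fun w => w) z (RtoC 1).
Proof. apply is_Cderive_AbsRing. exact (is_derive_id z). Qed.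

Lemma is_Cderive_minus f g z df dg :
  is_Cderive f z df -> is_Cderive g z dg -> is_Cderive (fun w => f w - g w)%C z (df - dg)%C.
Proof. apply (@is_derive_minus C_AbsRing C_NormedModule). Qed.

Lemma is_Cderive_comp f g z df dg :
  is_Cderive f (g z) df -> is_Cderive g z dg -> is_Cderive (fun w => f (g w)) z (dg * df)%C.
Proof.
  intros Hf Hg. apply (@is_derive_comp C_AbsRing C_NormedModule); [exact Hf |].
  apply is_Cderive_AbsRing, Hg.
Qed.

Lemma is_Cderive_mult f g z df dg :
  is_Cderive f z df -> is_Cderive g z dg ->
  is_Cderive (fun w => f w * g w)%C z (df * g z + f z * dg)%C.
Proof.
  intros Hf%is_Cderive_AbsRing Hg%is_Cderive_AbsRing. apply is_Cderive_AbsRing.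
  exact (is_derive_mult f g z df dg Hf Hg Cmult_comm).
Qed.

Lemma is_Cderive_scal_l (k z : C) : is_Cderive (fun w => k * w)%C z k.
Proof.
  pose proof (is_Cderive_mult _ _ z _ _ (is_Cderive_const k z) (is_Cderive_id z)) as H.
  cbv beta in H. replace (RtoC 0 * z + k * RtoC 1)%C with k in H by ring. exact H.
Qed.

Lemma is_Cderive_inv (z : C) : z <> RtoC 0 -> is_Cderive Cinv z (- / (z * z))%C.
Proof.
  intros Hz. apply is_Cderive_eps. intros eps Heps.
  assert (Hm : 0 < Cmod z) by (apply Cmod_gt_0; auto).
  assert (Hm3 : 0 < Cmod z * Cmod z * Cmod z) by (repeat apply Rmult_lt_0_compat; auto).
  exists (Rmin (Cmod z / 2) (eps * (Cmod z * Cmod z * Cmod z) / 2)). split.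
  { apply Rmin_pos; [lra |]. apply Rdiv_lt_0_compat; nra. }
  intros w Hw.
  assert (Hw1 : Cmod (w - z) < Cmod z / 2) by (eapply Rlt_le_trans; [exact Hw | apply Rmin_l]).
  assert (Hw2 : Cmod (w - z) < eps * (Cmod z * Cmod z * Cmod z) / 2)
    by (eapply Rlt_le_trans; [exact Hw | apply Rmin_r]).
  assert (Hwm : Cmod z / 2 <= Cmod w).
  { pose proof (Cmod_reverse_triangle z w). rewrite Cmod_minus_sym in H. lra. }
  assert (Hw0 : w <> RtoC 0) by (intro E; subst; rewrite Cmod_0 in Hwm; lra).
  replace (/ w - / z - - / (z * z) * (w - z))%C with ((w - z) * (w - z) / (w * (z * z)))%C
    by (field; split; auto).
  unfold Cdiv. rewrite !Cmod_mult, Cmod_inv, !Cmod_mult by (repeat apply Cmult_neq_0; auto).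
  pose proof (Cmod_ge_0 (w - z)).
  assert (0 < Cmod w * (Cmod z * Cmod z)) by (apply Rmult_lt_0_compat; nra).
  apply Rmult_le_reg_r with (Cmod w * (Cmod z * Cmod z)); auto.
  rewrite Rmult_assoc, Rinv_l, Rmult_1_r by lra.
  assert (Cmod (w - z) <= eps * (Cmod w * (Cmod z * Cmod z))).
  { assert (Cmod z * Cmod z * Cmod z / 2 <= Cmod w * (Cmod z * Cmod z)) by nra. nra. }
  nra.
Qed.

Lemma is_Cderive_div f g z df dg :
  is_Cderive f z df -> is_Cderive g z dg -> g z <> RtoC 0 ->
  is_Cderive (fun w => f w / g w)%C z ((df * g z - f z * dg) / (g z * g z))%C.
Proof.
  intros Hf Hg Hz.
  pose proof (is_Cderive_mult _ _ _ _ _ Hf (is_Cderive_comp Cinv g z _ _ (is_Cderive_inv _ Hz) Hg)) as H.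
  replace ((df * g z - f z * dg) / (g z * g z))%C with (df * / g z + f z * (dg * - / (g z * g z)))%C
    by (field; auto).
  exact H.
Qed.

Lemma is_Cderive_ext_loc f g z l d : 0 < d -> (forall w, Cmod (w - z) < d -> f w = g w) ->
  is_Cderive f z l -> is_Cderive g z l.
Proof.
  intros Hd E H. rewrite is_Cderive_eps in *.
  intros e He. destruct (H e He) as [d1 [Hd1 H1]]. exists (Rmin d d1). split; [apply Rmin_pos; auto |].
  intros w Hw. rewrite <- !E.
  - apply H1. eapply Rlt_le_trans; [exact Hw | apply Rmin_r].
  - replace (z - z)%C with (RtoC 0) by ring. rewrite Cmod_0. auto.
  - eapply Rlt_le_trans; [exact Hw | apply Rmin_l].
Qed.

Lemma is_Cderive_continuous f z l : is_Cderive f z l -> Ccontinuous_at f z.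
Proof.
  intros H eps Heps. rewrite is_Cderive_eps in H.
  destruct (H 1 Rlt_0_1) as [d [Hd Hd']].
  pose proof (Cmod_ge_0 l).
  exists (Rmin d (eps / (Cmod l + 2))). split.
  { apply Rmin_pos; auto. apply Rdiv_lt_0_compat; lra. }
  intros w Hw.
  assert (Hw1 : Cmod (w - z) < d) by (eapply Rlt_le_trans; [exact Hw | apply Rmin_l]).
  assert (Hw2 : Cmod (w - z) < eps / (Cmod l + 2)) by (eapply Rlt_le_trans; [exact Hw | apply Rmin_r]).
  specialize (Hd' w Hw1).
  replace (f w - f z)%C with ((f w - f z - l * (w - z)) + l * (w - z))%C by ring.
  eapply Rle_lt_trans; [apply Cmod_triangle |]. rewrite Cmod_mult.
  pose proof (Cmod_ge_0 (w - z)).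
  assert (Cmod (w - z) * (Cmod l + 2) < eps).
  { assert (E : eps / (Cmod l + 2) * (Cmod l + 2) = eps) by (field; lra). nra. }
  nra.
Qed.

Lemma Ccontinuous_at_const (c z : C) : Ccontinuous_at (fun _ => c) z.
Proof.
  intros e He. exists 1. split; [lra |]. intros.
  replace (c - c)%C with (RtoC 0) by ring. rewrite Cmod_0. auto.
Qed.

Lemma Ccontinuous_at_comp g f z : Ccontinuous_at f z -> Ccontinuous_at g (f z) ->
  Ccontinuous_at (fun w => g (f w)) z.
Proof.
  intros Hf Hg e He. destruct (Hg e He) as [d1 [Hd1 H1]].
  destruct (Hf d1 Hd1) as [d2 [Hd2 H2]]. exists d2; split; auto.
Qed.

Lemma Ccontinuous_at_plus f g z : Ccontinuous_at f z -> Ccontinuous_at g z ->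
  Ccontinuous_at (fun w => f w + g w)%C z.
Proof.
  intros Hf Hg e He. destruct (Hf (e/2) ltac:(lra)) as [d1 [Hd1 H1]].
  destruct (Hg (e/2) ltac:(lra)) as [d2 [Hd2 H2]].
  exists (Rmin d1 d2). split; [apply Rmin_pos; auto |]. intros w Hw.
  specialize (H1 w ltac:(eapply Rlt_le_trans; [exact Hw | apply Rmin_l])).
  specialize (H2 w ltac:(eapply Rlt_le_trans; [exact Hw | apply Rmin_r])).
  replace (f w + g w - (f z + g z))%C with ((f w - f z) + (g w - g z))%C by ring.
  eapply Rle_lt_trans; [apply Cmod_triangle | lra].
Qed.

Lemma Ccontinuous_at_opp f z : Ccontinuous_at f z -> Ccontinuous_at (fun w => - f w)%C z.
Proof.
  intros Hf e He. destruct (Hf e He) as [d [Hd H]]. exists d; split; auto. intros w Hw.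
  replace (- f w - - f z)%C with (- (f w - f z))%C by ring. rewrite Cmod_opp. auto.
Qed.

Lemma Ccontinuous_at_minus f g z : Ccontinuous_at f z -> Ccontinuous_at g z ->
  Ccontinuous_at (fun w => f w - g w)%C z.
Proof. intros Hf Hg. apply Ccontinuous_at_plus; [exact Hf | apply Ccontinuous_at_opp, Hg]. Qed.

Lemma Ccontinuous_at_mult f g z : Ccontinuous_at f z -> Ccontinuous_at g z ->
  Ccontinuous_at (fun w => f w * g w)%C z.
Proof.
  intros Hf Hg e He.
  set (A := Cmod (f z) + 1). set (B := Cmod (g z) + 1).
  assert (HA : 0 < A) by (unfold A; pose proof (Cmod_ge_0 (f z)); lra).
  assert (HB : 0 < B) by (unfold B; pose proof (Cmod_ge_0 (g z)); lra).
  set (e1 := Rmin 1 (e / (2 * B))). set (e2 := e / (2 * A)).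
  assert (He1 : 0 < e1) by (unfold e1; apply Rmin_pos; [lra |]; apply Rdiv_lt_0_compat; lra).
  assert (He2 : 0 < e2) by (unfold e2; apply Rdiv_lt_0_compat; lra).
  destruct (Hf e1 He1) as [d1 [Hd1 H1]]. destruct (Hg e2 He2) as [d2 [Hd2 H2]].
  exists (Rmin d1 d2). split; [apply Rmin_pos; auto |]. intros w Hw.
  specialize (H1 w ltac:(eapply Rlt_le_trans; [exact Hw | apply Rmin_l])).
  specialize (H2 w ltac:(eapply Rlt_le_trans; [exact Hw | apply Rmin_r])).
  replace (f w * g w - f z * g z)%C with ((f w - f z) * g z + f w * (g w - g z))%C by ring.
  eapply Rle_lt_trans; [apply Cmod_triangle |]. rewrite !Cmod_mult.
  assert (e1 <= 1) by apply Rmin_l. assert (e1 <= e / (2 * B)) by apply Rmin_r.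
  assert (Hfw : Cmod (f w) <= A).
  { unfold A. replace (f w) with ((f w - f z) + f z)%C by ring.
    eapply Rle_trans; [apply Cmod_triangle | lra]. }
  assert (E1 : e / (2 * B) * B = e / 2) by (field; lra).
  assert (E2 : e2 * A = e / 2) by (unfold e2; field; lra).
  pose proof (Cmod_ge_0 (f w - f z)). pose proof (Cmod_ge_0 (g w - g z)).
  pose proof (Cmod_ge_0 (f w)). pose proof (Cmod_ge_0 (g z)).
  assert (Cmod (f w - f z) * Cmod (g z) <= e / 2).
  { apply Rle_trans with (e1 * B); [apply Rmult_le_compat; unfold B; lra | nra]. }
  assert (Cmod (f w) * Cmod (g w - g z) < e / 2).
  { apply Rle_lt_trans with (A * Cmod (g w - g z)); [apply Rmult_le_compat_r; lra |].
    rewrite <- E2, Rmult_comm. apply Rmult_lt_compat_r; lra. }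
  lra.
Qed.

Lemma Ccontinuous_at_conj f z : Ccontinuous_at f z -> Ccontinuous_at (fun w => Cconj (f w)) z.
Proof.
  intros Hf e He. destruct (Hf e He) as [d [Hd H]]. exists d; split; auto. intros w Hw.
  rewrite <- Cminus_conj, Cmod_conj. auto.
Qed.

Lemma Ccontinuous_at_inv f z : Ccontinuous_at f z -> f z <> RtoC 0 -> Ccontinuous_at (fun w => / f w)%C z.
Proof.
  intros Hf Hz. apply (Ccontinuous_at_comp Cinv f z Hf).
  eapply is_Cderive_continuous, is_Cderive_inv, Hz.
Qed.

(** * The complex exponential *)

Definition cexp (w : C) : C := (exp (fst w) * cos (snd w), exp (fst w) * sin (snd w)).

Lemma cexp_plus (a b : C) : cexp (a + b)%C = (cexp a * cexp b)%C.
Proof.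
  destruct a as [a1 a2], b as [b1 b2]. unfold cexp, Cmult, Cplus; simpl.
  rewrite exp_plus, cos_plus, sin_plus. f_equal; ring.
Qed.

Lemma Cmod_cexp (w : C) : Cmod (cexp w) = exp (fst w).
Proof.
  unfold cexp. rewrite Cmod_pair.
  replace (exp (fst w) * cos (snd w) * (exp (fst w) * cos (snd w)) +
     exp (fst w) * sin (snd w) * (exp (fst w) * sin (snd w)))
    with (exp (fst w) * exp (fst w) * (Rsqr (sin (snd w)) + Rsqr (cos (snd w)))) by (unfold Rsqr; ring).
  rewrite sin2_cos2, Rmult_1_r. apply sqrt_square. left; apply exp_pos.
Qed.

Lemma derivable_pt_lim_eps f x l : derivable_pt_lim f x l ->
  forall eps, 0 < eps -> exists delta, 0 < delta /\ forall h, Rabs h < delta ->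
  Rabs (f (x + h) - f x - l * h) <= eps * Rabs h.
Proof.
  intros H eps Heps. destruct (H eps Heps) as [d Hd]. exists d; split; [apply cond_pos |].
  intros h Hh. destruct (Req_dec h 0) as [-> | Hn].
  { rewrite Rplus_0_r. replace (f x - f x - l * 0) with 0 by ring. rewrite Rabs_R0, Rmult_0_r. lra. }
  specialize (Hd h Hn Hh).
  replace (f (x + h) - f x - l * h) with (((f (x + h) - f x) / h - l) * h) by (field; auto).
  rewrite Rabs_mult. pose proof (Rabs_pos h). nra.
Qed.

Lemma cexp_minus_linear (u v : R) :
  (cexp (u, v) - 1 - (u, v))%C =
  (((exp u - 1 - u) * cos v + (1 + u) * (cos v - 1))%R, ((exp u - 1) * sin v + (sin v - v))%R).
Proof. unfold cexp, Cminus, Cplus, Copp; simpl. f_equal; ring. Qed.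

(* The three real first-order expansions of [exp], [cos], [sin] at 0 combine
   through [cexp_minus_linear]; the cross term is quadratic in [h]. *)
Lemma cexp_linear_approx_0 eps : 0 < eps -> exists delta, 0 < delta /\ forall h,
  Cmod h < delta -> Cmod (cexp h - 1 - h) <= eps * Cmod h.
Proof.
  intros Heps. set (e := Rmin (eps / 8) 1).
  assert (He : 0 < e) by (apply Rmin_pos; lra).
  assert (He8 : e <= eps / 8) by apply Rmin_l.
  assert (He1 : e <= 1) by apply Rmin_r.
  pose proof (derivable_pt_lim_exp 0) as Dexp. rewrite exp_0 in Dexp.
  pose proof (derivable_pt_lim_cos 0) as Dcos. rewrite sin_0, Ropp_0 in Dcos.
  pose proof (derivable_pt_lim_sin 0) as Dsin. rewrite cos_0 in Dsin.
  destruct (derivable_pt_lim_eps _ _ _ Dexp e He) as [d1 [Hd1 H1]].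
  destruct (derivable_pt_lim_eps _ _ _ Dcos e He) as [d2 [Hd2 H2]].
  destruct (derivable_pt_lim_eps _ _ _ Dsin e He) as [d3 [Hd3 H3]].
  exists (Rmin e (Rmin d1 (Rmin d2 d3))). split; [repeat apply Rmin_pos; lra |].
  intros [u v] Hh.
  assert (Hmin : forall a b, Cmod (u, v) < Rmin a b -> Cmod (u, v) < a /\ Cmod (u, v) < b)
    by (intros a b Hab; split; eapply Rlt_le_trans; try apply Hab; [apply Rmin_l | apply Rmin_r]).
  destruct (Hmin _ _ Hh) as [Hhe Hh']. destruct (Hmin _ _ Hh') as [Hh1 Hh'']. destruct (Hmin _ _ Hh'') as [Hh2 Hh3].
  pose proof (re_le_Cmod (u, v)) as Hu. pose proof (snd_le_Cmod (u, v)) as Hv. simpl in Hu, Hv.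
  specialize (H1 u ltac:(lra)). specialize (H2 v ltac:(lra)). specialize (H3 v ltac:(lra)).
  rewrite Rplus_0_l, exp_0, Rmult_1_l in H1. rewrite Rplus_0_l, cos_0, Rmult_0_l, Rminus_0_r in H2.
  rewrite Rplus_0_l, sin_0, Rmult_1_l, Rminus_0_r in H3.
  rewrite cexp_minus_linear. eapply Rle_trans; [apply Cmod_pair_le |].
  pose proof (Rabs_pos u). pose proof (Rabs_pos v).
  assert (Hcos : Rabs (cos v) <= 1) by (apply Rabs_le, COS_bound).
  assert (Hexp : Rabs (exp u - 1) <= 2 * Cmod (u, v))
    by (replace (exp u - 1) with ((exp u - 1 - u) + u) by ring; eapply Rle_trans; [apply Rabs_triang | nra]).
  assert (Hsin : Rabs (sin v) <= 2 * Cmod (u, v))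
    by (replace (sin v) with ((sin v - v) + v) by ring; eapply Rle_trans; [apply Rabs_triang | nra]).
  assert (H1u : Rabs (1 + u) <= 2) by (eapply Rle_trans; [apply Rabs_triang | rewrite Rabs_R1; lra]).
  pose proof (Rabs_triang ((exp u - 1 - u) * cos v) ((1 + u) * (cos v - 1))).
  pose proof (Rabs_triang ((exp u - 1) * sin v) (sin v - v)).
  rewrite !Rabs_mult in *.
  pose proof (Rabs_pos (exp u - 1 - u)). pose proof (Rabs_pos (cos v - 1)).
  pose proof (Rabs_pos (exp u - 1)). pose proof (Rabs_pos (sin v)).
  pose proof (Rabs_pos (cos v)). pose proof (Rabs_pos (1 + u)).
  nra.
Qed.

Lemma is_Cderive_cexp (w : C) : is_Cderive cexp w (cexp w).
Proof.
  apply is_Cderive_eps. intros eps Heps.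
  assert (Hp : 0 < Cmod (cexp w)) by (rewrite Cmod_cexp; apply exp_pos).
  destruct (cexp_linear_approx_0 (eps / Cmod (cexp w))) as [d [Hd H]]; [apply Rdiv_lt_0_compat; auto |].
  exists d; split; auto. intros z Hz. specialize (H (z - w)%C Hz).
  replace (cexp z - cexp w - cexp w * (z - w))%C with (cexp w * (cexp (z - w) - 1 - (z - w)))%C.
  2: { replace (cexp z) with (cexp w * cexp (z - w))%C by (rewrite <- cexp_plus; f_equal; ring). ring. }
  rewrite Cmod_mult.
  replace (eps * Cmod (z - w)) with (Cmod (cexp w) * (eps / Cmod (cexp w) * Cmod (z - w))) by (field; lra).
  apply Rmult_le_compat_l; lra.
Qed.

Lemma cexp_minus_PI s : cexp (s, - PI) = cexp (s, PI).
Proof. unfold cexp; simpl. rewrite cos_neg, sin_neg, sin_PI. f_equal. f_equal. ring. Qed.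

Lemma cexp_eq_pos_real x s t : 0 < x -> - PI <= t <= PI -> cexp (s, t) = RtoC x -> s = ln x /\ t = 0.
Proof.
  intros Hx Ht E.
  assert (Es : exp s = x).
  { change (exp s) with (exp (fst (s, t))). rewrite <- Cmod_cexp, E, Cmod_R, Rabs_right; lra. }
  split; [rewrite <- Es, ln_exp; auto |].
  unfold cexp in E; simpl in E. injection E as E1 _. rewrite Es in E1.
  assert (Hc : cos t = 1) by (apply Rmult_eq_reg_l with x; lra).
  pose proof PI_RGT_0.
  destruct (Rle_or_lt 0 t).
  - apply (cos_inj t 0); try lra. rewrite cos_0; auto.
  - enough (- t = 0) by lra. apply (cos_inj (- t) 0); try lra. rewrite cos_neg, cos_0; auto.
Qed.

(** * Integrals over boundaries of rectangles *)

Notation CR := C_R_CompleteNormedModule.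

Lemma norm_CR (x : C_R_NormedModule) : norm x = Cmod x.
Proof. rewrite Cmod_norm. reflexivity. Qed.

Lemma continuous_R_C_eps (g : R -> C) t :
  (forall eps, 0 < eps -> exists d, 0 < d /\ forall s, Rabs (s - t) < d -> Cmod (g s - g t) < eps) ->
  @continuous R_UniformSpace CR g t.
Proof.
  intros H P [eps HP]. destruct (H eps (cond_pos eps)) as [d [Hd Hd']].
  exists (mkposreal d Hd). intros s Hs. apply HP.
  specialize (Hd' s Hs).
  pose proof (re_le_Cmod (g s - g t)%C). pose proof (snd_le_Cmod (g s - g t)%C).
  split; simpl in *.
  - change (Rabs (fst (g s) - fst (g t)) < eps). unfold Rminus. lra.
  - change (Rabs (snd (g s) - snd (g t)) < eps). unfold Rminus. lra.
Qed.

Lemma continuous_horizontal (f : C -> C) x y : Ccontinuous_at f (x, y) ->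
  @continuous R_UniformSpace CR (fun t => f (t, y)) x.
Proof.
  intros H. apply continuous_R_C_eps. intros eps Heps. destruct (H eps Heps) as [d [Hd Hd']].
  exists d; split; auto. intros s Hs. apply Hd'.
  change (Cmod ((s, y) - (x, y))%C < d).
  replace ((s, y) - (x, y))%C with (RtoC (s - x)) by (unfold RtoC, Cminus, Cplus, Copp; simpl; f_equal; ring).
  rewrite Cmod_R. auto.
Qed.

Lemma continuous_vertical (f : C -> C) x y : Ccontinuous_at f (x, y) ->
  @continuous R_UniformSpace CR (fun t => f (x, t)) y.
Proof.
  intros H. apply continuous_R_C_eps. intros eps Heps. destruct (H eps Heps) as [d [Hd Hd']].
  exists d; split; auto. intros s Hs. apply Hd'.
  change (Cmod ((x, s) - (x, y))%C < d).
  replace ((x, s) - (x, y))%C with (RtoC (s - y) * Ci)%C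
    by (unfold RtoC, Cminus, Cplus, Copp, Cmult, Ci; simpl; f_equal; ring).
  rewrite Cmod_mult, Cmod_R, Cmod_Ci. lra.
Qed.

Definition continuous_on_rect (f : C -> C) a b c d :=
  forall x y, a <= x <= b -> c <= y <= d -> Ccontinuous_at f (x, y).

Lemma continuous_on_rect_sub f a b c d a' b' c' d' :
  a <= a' -> b' <= b -> c <= c' -> d' <= d ->
  continuous_on_rect f a b c d -> continuous_on_rect f a' b' c' d'.
Proof. intros ? ? ? ? Hf x y Hx Hy. apply Hf; lra. Qed.

Definition int_horiz (f : C -> C) a b y : C := @RInt CR (fun t => f (t, y)) a b.
Definition int_vert (f : C -> C) c d x : C := @RInt CR (fun t => f (x, t)) c d.

(* The contour integral of [f dz] over the positively oriented boundary of
   [[a, b] x [c, d]]; on vertical sides [dz = i dt]. *)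
Definition rect_integral (f : C -> C) (a b c d : R) : C :=
  (int_horiz f a b c - int_horiz f a b d + Ci * (int_vert f c d b - int_vert f c d a))%C.

Lemma ex_RInt_horizontal (f : C -> C) a b c d y : a <= b -> c <= y <= d ->
  continuous_on_rect f a b c d -> @ex_RInt CR (fun t => f (t, y)) a b.
Proof.
  intros Hab Hy Hf. apply ex_RInt_continuous. intros z Hz.
  rewrite Rmin_left, Rmax_right in Hz by lra. apply continuous_horizontal, Hf; lra.
Qed.

Lemma ex_RInt_vertical (f : C -> C) a b c d x : c <= d -> a <= x <= b ->
  continuous_on_rect f a b c d -> @ex_RInt CR (fun t => f (x, t)) c d.
Proof.
  intros Hcd Hx Hf. apply ex_RInt_continuous. intros z Hz.
  rewrite Rmin_left, Rmax_right in Hz by lra. apply continuous_vertical, Hf; lra.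
Qed.

Ltac solve_ex_RInt :=
  match goal with
  | H : continuous_on_rect ?f ?a ?b ?c ?d |- ex_RInt (fun t => ?f (t, ?y)) ?a' ?b' =>
      apply (ex_RInt_horizontal f a' b' c d y); [lra | lra |];
      apply (continuous_on_rect_sub f a b c d); [lra .. | exact H]
  | H : continuous_on_rect ?f ?a ?b ?c ?d |- ex_RInt (fun t => ?f (?x, t)) ?c' ?d' =>
      apply (ex_RInt_vertical f a b c' d' x); [lra | lra |];
      apply (continuous_on_rect_sub f a b c d); [lra .. | exact H]
  end.

Lemma rect_integral_split_x f a m b c d : a <= m <= b -> c <= d -> continuous_on_rect f a b c d ->
  rect_integral f a b c d = (rect_integral f a m c d + rect_integral f m b c d)%C.
Proof.
  intros Hm Hcd Hc. unfold rect_integral, int_horiz.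
  rewrite <- (@RInt_Chasles CR (fun t => f (t, c)) a m b).
  rewrite <- (@RInt_Chasles CR (fun t => f (t, d)) a m b).
  change (plus ?x ?y) with (Cplus x y). ring.
  all: solve_ex_RInt.
Qed.

Lemma rect_integral_split_y f a b c n d : a <= b -> c <= n <= d -> continuous_on_rect f a b c d ->
  rect_integral f a b c d = (rect_integral f a b c n + rect_integral f a b n d)%C.
Proof.
  intros Hab Hn Hc. unfold rect_integral, int_vert.
  rewrite <- (@RInt_Chasles CR (fun t => f (b, t)) c n d).
  rewrite <- (@RInt_Chasles CR (fun t => f (a, t)) c n d).
  change (plus ?x ?y) with (Cplus x y). ring.
  all: solve_ex_RInt.
Qed.

Lemma RInt_Cminus (F G : R -> C) a b : @ex_RInt CR F a b -> @ex_RInt CR G a b ->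
  @RInt CR (fun t => F t - G t)%C a b = (@RInt CR F a b - @RInt CR G a b)%C.
Proof. apply (@RInt_minus CR F G a b). Qed.

Lemma RInt_Cconst (k : C) a b : @RInt CR (fun _ => k) a b = (RtoC (b - a) * k)%C.
Proof. rewrite RInt_const. apply scal_R_Cmult. Qed.

Lemma RInt_Cmod_bound (F : R -> C) a b M : a <= b -> @ex_RInt CR F a b ->
  (forall t, a <= t <= b -> Cmod (F t) <= M) -> Cmod (@RInt CR F a b) <= (b - a) * M.
Proof.
  intros Hab HF HM. rewrite <- norm_CR.
  apply (@norm_RInt_le_const C_R_NormedModule F a b _ M Hab).
  - intros t Ht. rewrite norm_CR. auto.
  - apply (@RInt_correct CR); auto.
Qed.

Lemma rect_integral_minus f g a b c d : a <= b -> c <= d ->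
  continuous_on_rect f a b c d -> continuous_on_rect g a b c d ->
  rect_integral (fun w => f w - g w)%C a b c d = (rect_integral f a b c d - rect_integral g a b c d)%C.
Proof.
  intros Hab Hcd Hf Hg. unfold rect_integral, int_horiz, int_vert.
  rewrite (RInt_Cminus (fun t => f (t, c)) (fun t => g (t, c))),
    (RInt_Cminus (fun t => f (t, d)) (fun t => g (t, d))),
    (RInt_Cminus (fun t => f (b, t)) (fun t => g (b, t))),
    (RInt_Cminus (fun t => f (a, t)) (fun t => g (a, t))) by solve_ex_RInt.
  ring.
Qed.

Lemma Ccontinuous_at_affine (k l p z : C) : Ccontinuous_at (fun w => k + l * (w - p))%C z.
Proof.
  intros eps Heps. pose proof (Cmod_ge_0 l).
  exists (eps / (Cmod l + 1)). split; [apply Rdiv_lt_0_compat; lra |].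
  intros w Hw.
  replace (k + l * (w - p) - (k + l * (z - p)))%C with (l * (w - z))%C by ring.
  rewrite Cmod_mult. pose proof (Cmod_ge_0 (w - z)).
  assert (E : eps / (Cmod l + 1) * (Cmod l + 1) = eps) by (field; lra).
  nra.
Qed.

Lemma rect_integral_affine (k l p : C) a b c d : a <= b -> c <= d ->
  rect_integral (fun w => k + l * (w - p))%C a b c d = RtoC 0.
Proof.
  intros Hab Hcd.
  set (A := (fun w => k + l * (w - p))%C).
  assert (HA : continuous_on_rect A a b c d) by (intros x y _ _; apply Ccontinuous_at_affine).
  unfold rect_integral, int_horiz, int_vert.
  rewrite <- (RInt_Cminus (fun t => A (t, c)) (fun t => A (t, d))) by solve_ex_RInt.
  rewrite <- (RInt_Cminus (fun t => A (b, t)) (fun t => A (a, t))) by solve_ex_RInt.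
  rewrite (@RInt_ext CR (fun t => A (t, c) - A (t, d))%C (fun _ => l * (RtoC (c - d) * Ci))%C)
    by (intros; unfold A, RtoC, Cminus, Cplus, Copp, Cmult, Ci; simpl; f_equal; ring).
  rewrite (@RInt_ext CR (fun t => A (b, t) - A (a, t))%C (fun _ => l * RtoC (b - a))%C)
    by (intros; unfold A, RtoC, Cminus, Cplus, Copp, Cmult, Ci; simpl; f_equal; ring).
  rewrite !RInt_Cconst. unfold RtoC, Cminus, Cplus, Copp, Cmult, Ci; simpl. f_equal; ring.
Qed.

Lemma rect_integral_bound f a b c d M : a <= b -> c <= d -> continuous_on_rect f a b c d ->
  (forall x y, a <= x <= b -> c <= y <= d -> Cmod (f (x, y)) <= M) ->
  Cmod (rect_integral f a b c d) <= 2 * (b - a) * M + 2 * (d - c) * M.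
Proof.
  intros Hab Hcd Hf HM. unfold rect_integral.
  assert (B1 : Cmod (int_horiz f a b c) <= (b - a) * M)
    by (apply RInt_Cmod_bound; [lra | solve_ex_RInt | intros; apply HM; lra]).
  assert (B2 : Cmod (int_horiz f a b d) <= (b - a) * M)
    by (apply RInt_Cmod_bound; [lra | solve_ex_RInt | intros; apply HM; lra]).
  assert (B3 : Cmod (int_vert f c d b) <= (d - c) * M)
    by (apply RInt_Cmod_bound; [lra | solve_ex_RInt | intros; apply HM; lra]).
  assert (B4 : Cmod (int_vert f c d a) <= (d - c) * M)
    by (apply RInt_Cmod_bound; [lra | solve_ex_RInt | intros; apply HM; lra]).
  eapply Rle_trans; [apply Cmod_triangle |].
  rewrite Cmod_mult, Cmod_Ci, Rmult_1_l.
  pose proof (Cmod_triangle (int_horiz f a b c) (- int_horiz f a b d)%C).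
  pose proof (Cmod_triangle (int_vert f c d b) (- int_vert f c d a)%C).
  rewrite Cmod_opp in *. unfold Cminus. lra.
Qed.

(* Affine functions integrate to 0, so only the first-order remainder of [f]
   at [p] contributes. *)
Lemma rect_integral_remainder_bound f a b c d p l M :
  a <= b -> c <= d -> continuous_on_rect f a b c d ->
  (forall x y, a <= x <= b -> c <= y <= d -> Cmod (f (x, y) - f p - l * ((x, y) - p)) <= M) ->
  Cmod (rect_integral f a b c d) <= 2 * (b - a) * M + 2 * (d - c) * M.
Proof.
  intros Hab Hcd Hc HM.
  assert (Haff : continuous_on_rect (fun w => f p + l * (w - p))%C a b c d)
    by (intros x y _ _; apply Ccontinuous_at_affine).
  replace (rect_integral f a b c d) with (rect_integral (fun w => f w - (f p + l * (w - p)))%C a b c d)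
    by (rewrite rect_integral_minus, rect_integral_affine by auto; ring).
  apply rect_integral_bound; auto.
  - intros x y Hx Hy. apply Ccontinuous_at_minus; [apply Hc | apply Haff]; auto.
  - intros x y Hx Hy. replace (f (x, y) - (f p + l * ((x, y) - p)))%C with (f (x, y) - f p - l * ((x, y) - p))%C by ring.
    auto.
Qed.

Lemma Cmod_pair_minus x y a c : Cmod ((x, y) - (a, c))%C <= Rabs (x - a) + Rabs (y - c).
Proof.
  replace ((x, y) - (a, c))%C with ((x - a)%R, (y - c)%R) by (unfold Cminus, Cplus, Copp; simpl; f_equal; ring).
  apply Cmod_pair_le.
Qed.

(** * Goursat's theorem *)

Lemma Cmod_le_eps_eq_0 (z : C) K : (forall eps, 0 < eps -> Cmod z <= K * eps) -> z = RtoC 0.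
Proof.
  intros H. apply Cmod_eq_0. pose proof (Cmod_ge_0 z).
  destruct (Rle_lt_or_eq_dec 0 _ H0) as [Hz |]; auto.
  destruct (Rle_or_lt K 0) as [HK | HK].
  - specialize (H 1 Rlt_0_1). lra.
  - specialize (H (Cmod z / (2 * K)) ltac:(apply Rdiv_lt_0_compat; lra)).
    replace (K * (Cmod z / (2 * K))) with (Cmod z / 2) in H by (field; lra). lra.
Qed.

Lemma nested_intervals (a b : nat -> R) :
  (forall n, a n <= b n) -> (forall n, a n <= a (S n)) -> (forall n, b (S n) <= b n) ->
  exists x, forall n, a n <= x <= b n.
Proof.
  intros Hab Ha Hb.
  assert (Hmono : forall n k, a n <= a (k + n)%nat /\ b (k + n)%nat <= b n).
  { intros n k. induction k as [| k IH]; simpl; [lra |]. specialize (Ha (k + n)%nat); specialize (Hb (k + n)%nat). lra. }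
  assert (Hcross : forall n m, a n <= b m).
  { intros n m. destruct (Nat.le_ge_cases n m) as [Hnm | Hnm].
    - destruct (Hmono n (m - n)%nat) as [H _]. replace (m - n + n)%nat with m in H by lia. specialize (Hab m). lra.
    - destruct (Hmono m (n - m)%nat) as [_ H]. replace (n - m + m)%nat with n in H by lia. specialize (Hab n). lra. }
  destruct (completeness (fun x => exists n, x = a n)) as [x [Hub Hlub]].
  - exists (b 0%nat). intros y [n ->]. apply Hcross.
  - exists (a 0%nat). eauto.
  - exists x. intros n. split; [apply Hub; eauto |]. apply Hlub. intros y [k ->]. apply Hcross.
Qed.

Lemma pow2_unbounded K : exists n : nat, K < 2 ^ n.
Proof.
  assert (HH : forall n : nat, INR n <= 2 ^ n).
  { induction n; [simpl; lra |]. rewrite S_INR. simpl.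
    assert (1 <= 2 ^ n) by (apply pow_R1_Rle; lra). lra. }
  destruct (INR_unbounded K) as [N HN]. exists N. specialize (HH N). lra.
Qed.

Record rect := Rect { rx1 : R; rx2 : R; ry1 : R; ry2 : R }.

Definition rect_valid Q := rx1 Q <= rx2 Q /\ ry1 Q <= ry2 Q.
Definition rect_sub Q Q0 := rx1 Q0 <= rx1 Q /\ rx2 Q <= rx2 Q0 /\ ry1 Q0 <= ry1 Q /\ ry2 Q <= ry2 Q0.
Definition rect_in (x y : R) Q := rx1 Q <= x <= rx2 Q /\ ry1 Q <= y <= ry2 Q.
Definition semiperimeter Q := (rx2 Q - rx1 Q) + (ry2 Q - ry1 Q).
Definition rect_cont f Q := continuous_on_rect f (rx1 Q) (rx2 Q) (ry1 Q) (ry2 Q).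
Definition rect_int f Q := rect_integral f (rx1 Q) (rx2 Q) (ry1 Q) (ry2 Q).

Definition quarter (Q : rect) (i : nat) : rect :=
  let m := (rx1 Q + rx2 Q) / 2 in let n := (ry1 Q + ry2 Q) / 2 in
  match i with
  | O => Rect (rx1 Q) m (ry1 Q) n
  | 1%nat => Rect m (rx2 Q) (ry1 Q) n
  | 2%nat => Rect (rx1 Q) m n (ry2 Q)
  | _ => Rect m (rx2 Q) n (ry2 Q)
  end.

Lemma quarter_geom Q i : rect_valid Q ->
  rect_valid (quarter Q i) /\ rect_sub (quarter Q i) Q /\
  semiperimeter (quarter Q i) = semiperimeter Q / 2.
Proof.
  intros [H1 H2]. unfold rect_valid, rect_sub, semiperimeter.
  destruct i as [| [| [| i]]]; simpl; repeat split; lra.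
Qed.

Lemma rect_cont_sub f Q Q0 : rect_sub Q Q0 -> rect_cont f Q0 -> rect_cont f Q.
Proof. intros [? [? [? ?]]]. apply continuous_on_rect_sub; lra. Qed.

Lemma rect_int_quarters f Q : rect_valid Q -> rect_cont f Q ->
  rect_int f Q = (rect_int f (quarter Q 0) + rect_int f (quarter Q 1) +
                  rect_int f (quarter Q 2) + rect_int f (quarter Q 3))%C.
Proof.
  intros [H1 H2] Hc. unfold rect_int, rect_cont in *; simpl.
  rewrite (rect_integral_split_x f (rx1 Q) ((rx1 Q + rx2 Q) / 2) (rx2 Q)) by (auto; lra).
  rewrite (rect_integral_split_y f (rx1 Q) ((rx1 Q + rx2 Q) / 2) (ry1 Q) ((ry1 Q + ry2 Q) / 2)),
    (rect_integral_split_y f ((rx1 Q + rx2 Q) / 2) (rx2 Q) (ry1 Q) ((ry1 Q + ry2 Q) / 2));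
    try lra; try (apply (continuous_on_rect_sub f (rx1 Q) (rx2 Q) (ry1 Q) (ry2 Q)); auto; lra).
  ring.
Qed.

Definition large_integral f eps Q := 2 * eps * semiperimeter Q ^ 2 < Cmod (rect_int f Q).

Lemma large_integral_quarter f eps Q : rect_valid Q -> rect_cont f Q -> large_integral f eps Q ->
  exists i, large_integral f eps (quarter Q i).
Proof.
  intros Hv Hc Hb. apply NNPP. intros Hn.
  assert (H : forall i, Cmod (rect_int f (quarter Q i)) <= 2 * eps * (semiperimeter Q / 2) ^ 2).
  { intros i. destruct (quarter_geom Q i Hv) as [_ [_ <-]].
    apply Rnot_lt_le. intros Hi. apply Hn. exists i. exact Hi. }
  unfold large_integral in Hb. rewrite rect_int_quarters in Hb by auto.
  pose proof (H 0%nat). pose proof (H 1%nat). pose proof (H 2%nat). pose proof (H 3%nat).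
  pose proof (Cmod_triangle (rect_int f (quarter Q 0) + rect_int f (quarter Q 1) + rect_int f (quarter Q 2))
    (rect_int f (quarter Q 3))).
  pose proof (Cmod_triangle (rect_int f (quarter Q 0) + rect_int f (quarter Q 1)) (rect_int f (quarter Q 2))).
  pose proof (Cmod_triangle (rect_int f (quarter Q 0)) (rect_int f (quarter Q 1))).
  simpl in *. lra.
Qed.

Definition large_quarter f eps Q : rect :=
  if excluded_middle_informative (large_integral f eps (quarter Q 0)) then quarter Q 0 else
  if excluded_middle_informative (large_integral f eps (quarter Q 1)) then quarter Q 1 else
  if excluded_middle_informative (large_integral f eps (quarter Q 2)) then quarter Q 2 else quarter Q 3.

Lemma large_quarter_is_quarter f eps Q : exists i, large_quarter f eps Q = quarter Q i.
Proof.
  unfold large_quarter.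
  destruct excluded_middle_informative; [eauto |].
  destruct excluded_middle_informative; [eauto |].
  destruct excluded_middle_informative; eauto.
Qed.

Lemma large_quarter_large f eps Q : rect_valid Q -> rect_cont f Q -> large_integral f eps Q ->
  large_integral f eps (large_quarter f eps Q).
Proof.
  intros Hv Hc Hb. destruct (large_integral_quarter f eps Q Hv Hc Hb) as [i Hi].
  unfold large_quarter.
  destruct excluded_middle_informative as [| N0]; [assumption |].
  destruct excluded_middle_informative as [| N1]; [assumption |].
  destruct excluded_middle_informative as [| N2]; [assumption |].
  destruct i as [| [| [| i]]]; [contradiction N0 | contradiction N1 | contradiction N2 |]; exact Hi.
Qed.

Fixpoint bisection f eps Q0 n : rect :=
  match n with O => Q0 | S n => large_quarter f eps (bisection f eps Q0 n) end.

Lemma bisection_spec f eps Q0 : rect_valid Q0 -> rect_cont f Q0 -> large_integral f eps Q0 ->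
  forall n, rect_valid (bisection f eps Q0 n) /\ rect_sub (bisection f eps Q0 n) Q0 /\
    semiperimeter (bisection f eps Q0 n) = semiperimeter Q0 / 2 ^ n /\
    large_integral f eps (bisection f eps Q0 n).
Proof.
  intros Hv Hc Hb n. induction n as [| n [Hv' [Hs' [E Hb']]]].
  - simpl. split; [exact Hv | split; [unfold rect_sub; lra | split; [field | exact Hb]]].
  - simpl bisection. destruct (large_quarter_is_quarter f eps (bisection f eps Q0 n)) as [i Hi].
    destruct (quarter_geom (bisection f eps Q0 n) i Hv') as [Hv2 [Hs2 E2]].
    assert (Hc' : rect_cont f (bisection f eps Q0 n)) by (eapply rect_cont_sub; eauto).
    split; [| split; [| split]].
    + rewrite Hi. exact Hv2.
    + rewrite Hi. unfold rect_sub in *. lra.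
    + rewrite Hi, E2, E. simpl. field. apply pow_nonzero. lra.
    + apply large_quarter_large; auto.
Qed.

Lemma bisection_nested f eps Q0 n : rect_valid (bisection f eps Q0 n) ->
  rect_sub (bisection f eps Q0 (S n)) (bisection f eps Q0 n).
Proof.
  intros Hv. simpl. destruct (large_quarter_is_quarter f eps (bisection f eps Q0 n)) as [i ->].
  apply quarter_geom, Hv.
Qed.

Lemma rect_int_near_derivative f Q x y l eps delta :
  0 < eps -> rect_valid Q -> rect_cont f Q -> rect_in x y Q -> semiperimeter Q < delta ->
  (forall w, Cmod (w - (x, y)) < delta -> Cmod (f w - f (x, y) - l * (w - (x, y))) <= eps * Cmod (w - (x, y))) ->
  Cmod (rect_int f Q) <= 2 * eps * semiperimeter Q ^ 2.
Proof.
  intros Heps [Hv1 Hv2] Hc [Hx Hy] Hs Hd.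
  replace (2 * eps * semiperimeter Q ^ 2) with
    (2 * (rx2 Q - rx1 Q) * (eps * semiperimeter Q) + 2 * (ry2 Q - ry1 Q) * (eps * semiperimeter Q))
    by (unfold semiperimeter; ring).
  apply (rect_integral_remainder_bound f _ _ _ _ (x, y) l); auto.
  intros u v Hu Hv.
  assert (Cmod ((u, v) - (x, y))%C <= semiperimeter Q).
  { eapply Rle_trans; [apply Cmod_pair_minus |].
    unfold semiperimeter. apply Rplus_le_compat; apply Rabs_le; lra. }
  eapply Rle_trans; [apply Hd; lra |]. apply Rmult_le_compat_l; lra.
Qed.

Theorem goursat f a b c d : a <= b -> c <= d ->
  (forall x y, a <= x <= b -> c <= y <= d -> exists l, is_Cderive f (x, y) l) ->
  rect_integral f a b c d = RtoC 0.
Proof.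
  intros Hab Hcd Hd.
  set (Q0 := Rect a b c d).
  assert (Hv : rect_valid Q0) by (unfold rect_valid; simpl; lra).
  assert (Hc : rect_cont f Q0).
  { intros x y Hx Hy. destruct (Hd x y Hx Hy) as [l Hl]. eapply is_Cderive_continuous; eauto. }
  apply (Cmod_le_eps_eq_0 _ (2 * semiperimeter Q0 ^ 2)). intros eps Heps.
  replace (2 * semiperimeter Q0 ^ 2 * eps) with (2 * eps * semiperimeter Q0 ^ 2) by ring.
  apply Rnot_lt_le. intros Hlarge. change (large_integral f eps Q0) in Hlarge.
  pose proof (bisection_spec f eps Q0 Hv Hc Hlarge) as HQ.
  assert (Hnest : forall n, rect_sub (bisection f eps Q0 (S n)) (bisection f eps Q0 n))
    by (intros n; apply bisection_nested, HQ).
  set (Q := bisection f eps Q0) in *.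
  destruct (nested_intervals (fun n => rx1 (Q n)) (fun n => rx2 (Q n))) as [x Hx];
    try (intros n; specialize (HQ n); specialize (Hnest n); unfold rect_valid, rect_sub in *; lra).
  destruct (nested_intervals (fun n => ry1 (Q n)) (fun n => ry2 (Q n))) as [y Hy];
    try (intros n; specialize (HQ n); specialize (Hnest n); unfold rect_valid, rect_sub in *; lra).
  destruct (Hd x y) as [l Hl]; [specialize (Hx 0%nat) | specialize (Hy 0%nat) |]; simpl in *; try lra.
  rewrite is_Cderive_eps in Hl. destruct (Hl eps Heps) as [delta [Hdelta Hl']].
  destruct (pow2_unbounded (semiperimeter Q0 / delta)) as [n Hn].
  destruct (HQ n) as [Hvn [Hsn [Es Hln]]].
  assert (Hsmall : semiperimeter (Q n) < delta).
  { rewrite Es. assert (0 < 2 ^ n) by (apply pow_lt; lra).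
    apply Rmult_lt_reg_r with (2 ^ n / delta); [apply Rdiv_lt_0_compat; lra |].
    replace (semiperimeter Q0 / 2 ^ n * (2 ^ n / delta)) with (semiperimeter Q0 / delta) by (field; lra).
    replace (delta * (2 ^ n / delta)) with (2 ^ n) by (field; lra). exact Hn. }
  unfold large_integral in Hln.
  pose proof (rect_int_near_derivative f (Q n) x y l eps delta Heps Hvn
    (rect_cont_sub f _ _ Hsn Hc) (conj (Hx n) (Hy n)) Hsmall Hl').
  lra.
Qed.

Section Punctured_rectangle.

Variables (f : C -> C) (a b c d x0 y0 : R).
Hypotheses (Hx0 : a < x0 < b) (Hy0 : c < y0 < d) (Hcont : continuous_on_rect f a b c d).
Hypothesis Hderiv : forall x y, a <= x <= b -> c <= y <= d -> (x, y) <> (x0, y0) ->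
  exists l, is_Cderive f (x, y) l.

Lemma rect_integral_excise del : 0 < del -> del < x0 - a -> del < b - x0 -> del < y0 - c -> del < d - y0 ->
  rect_integral f a b c d = rect_integral f (x0 - del) (x0 + del) (y0 - del) (y0 + del).
Proof.
  intros Hdel H1 H2 H3 H4.
  assert (Hg : forall a' b' c' d', a <= a' <= b' -> b' <= b -> c <= c' <= d' -> d' <= d ->
    (b' <= x0 - del \/ x0 + del <= a' \/ d' <= y0 - del \/ y0 + del <= c') ->
    rect_integral f a' b' c' d' = RtoC 0).
  { intros a' b' c' d' ? ? ? ? Hout. apply goursat; try lra.
    intros x y Hx Hy. apply Hderiv; try lra. intros E. injection E. lra. }
  assert (Hc : forall a' b' c' d', a <= a' -> b' <= b -> c <= c' -> d' <= d ->
    continuous_on_rect f a' b' c' d') by (intros; apply (continuous_on_rect_sub f a b c d); auto).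
  rewrite (rect_integral_split_x f a (x0 - del) b), (rect_integral_split_x f (x0 - del) (x0 + del) b),
    (rect_integral_split_y f (x0 - del) (x0 + del) c (y0 - del) d),
    (rect_integral_split_y f (x0 - del) (x0 + del) (y0 - del) (y0 + del) d);
    try lra; try (apply Hc; lra).
  rewrite (Hg a (x0 - del) c d) by (lra || (left; lra)).
  rewrite (Hg (x0 + del) b c d) by (lra || (right; left; lra)).
  rewrite (Hg (x0 - del) (x0 + del) c (y0 - del)) by (lra || (do 2 right; left; lra)).
  rewrite (Hg (x0 - del) (x0 + del) (y0 + del) d) by (lra || (do 3 right; lra)).
  ring.
Qed.

Theorem goursat_punctured : rect_integral f a b c d = RtoC 0.
Proof.
  apply (Cmod_le_eps_eq_0 _ 8). intros eta Heta.
  destruct (Hcont x0 y0 ltac:(lra) ltac:(lra) eta Heta) as [d1 [Hd1 Hf1]].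
  assert (Hdel : exists del, 0 < del /\ del <= 1 /\ del <= d1 / 4 /\ 2 * del <= x0 - a /\
    2 * del <= b - x0 /\ 2 * del <= y0 - c /\ 2 * del <= d - y0).
  { exists (Rmin (Rmin (Rmin (x0 - a) (b - x0)) (Rmin (y0 - c) (d - y0)) / 2) (Rmin (d1 / 4) 1)).
    unfold Rmin. repeat destruct Rle_dec; repeat split; lra. }
  destruct Hdel as [del [Hd0 [Hd1' [Hd2 [Ha [Hb [Hc Hd]]]]]]].
  rewrite (rect_integral_excise del) by lra.
  eapply Rle_trans.
  - apply (rect_integral_remainder_bound f _ _ _ _ (x0, y0) (RtoC 0) eta); try lra.
    + apply (continuous_on_rect_sub f a b c d); auto; lra.
    + intros x y Hx Hy.
      replace (f (x, y) - f (x0, y0) - RtoC 0 * ((x, y) - (x0, y0)))%C with (f (x, y) - f (x0, y0))%C by ring.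
      left. apply Hf1. eapply Rle_lt_trans; [apply Cmod_pair_minus |].
      assert (Rabs (x - x0) <= del) by (apply Rabs_le; lra).
      assert (Rabs (y - y0) <= del) by (apply Rabs_le; lra). lra.
  - nra.
Qed.

End Punctured_rectangle.

(** * The Schwarz lemma *)

Definition diff_quot (g : C -> C) (z0 dg : C) (z : C) : C :=
  if Ceq_dec z z0 then dg else ((g z - g z0) / (z - z0))%C.

Lemma Ccontinuous_at_diff_quot g z0 dg : is_Cderive g z0 dg -> Ccontinuous_at (diff_quot g z0 dg) z0.
Proof.
  intros H. rewrite is_Cderive_eps in H.
  intros e He. destruct (H (e / 2) ltac:(lra)) as [d [Hd H1]]. exists d; split; auto.
  intros w Hw. unfold diff_quot. destruct (Ceq_dec z0 z0) as [_ | n]; [| congruence].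
  destruct (Ceq_dec w z0) as [-> | Hn].
  - replace (dg - dg)%C with (RtoC 0) by ring. rewrite Cmod_0. lra.
  - specialize (H1 w Hw). pose proof (Cminus_eq_contra _ _ Hn) as Hwz.
    assert (0 < Cmod (w - z0)) by (apply Cmod_gt_0; auto).
    replace ((g w - g z0) / (w - z0) - dg)%C with ((g w - g z0 - dg * (w - z0)) / (w - z0))%C
      by (field; auto).
    rewrite Cmod_div by auto.
    apply Rle_lt_trans with (e / 2); [| lra].
    apply Rmult_le_reg_r with (Cmod (w - z0)); auto.
    unfold Rdiv. rewrite Rmult_assoc, Rinv_l by lra. lra.
Qed.

Lemma is_Cderive_diff_quot g z0 dg z : z <> z0 -> (exists l, is_Cderive g z l) ->
  exists l, is_Cderive (diff_quot g z0 dg) z l.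
Proof.
  intros Hz [lz Hl].
  assert (Hd : is_Cderive (fun w => g w - g z0)%C z (lz - RtoC 0)%C)
    by (apply is_Cderive_minus; [exact Hl | apply is_Cderive_const]).
  assert (Hm : is_Cderive (fun w => w - z0)%C z (RtoC 1 - RtoC 0)%C)
    by (apply is_Cderive_minus; [apply is_Cderive_id | apply is_Cderive_const]).
  eexists. apply (is_Cderive_ext_loc (fun w => (g w - g z0) / (w - z0))%C _ z _ (Cmod (z - z0))).
  - apply Cmod_gt_0, Cminus_eq_contra, Hz.
  - intros w Hw. unfold diff_quot. destruct (Ceq_dec w z0) as [-> | _]; auto.
    rewrite Cmod_minus_sym in Hw. lra.
  - apply is_Cderive_div; [exact Hd | exact Hm | apply Cminus_eq_contra, Hz].
Qed.

Lemma RInt_C_pair (F : R -> C) a b : @ex_RInt CR F a b ->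
  @RInt CR F a b = (RInt (fun t => fst (F t)) a b, RInt (fun t => snd (F t)) a b).
Proof.
  intros H. apply (@RInt_correct CR) in H.
  assert (E1 : RInt (fun t => fst (F t)) a b = fst (@RInt CR F a b))
    by exact (is_RInt_unique _ _ _ _ (@is_RInt_fct_extend_fst R_NormedModule R_NormedModule F a b _ H)).
  assert (E2 : RInt (fun t => snd (F t)) a b = snd (@RInt CR F a b))
    by exact (is_RInt_unique _ _ _ _ (@is_RInt_fct_extend_snd R_NormedModule R_NormedModule F a b _ H)).
  rewrite E1, E2. destruct (@RInt CR F a b); reflexivity.
Qed.

Lemma ex_RInt_Cscal (v : C) (g : R -> R) a b : ex_RInt g a b ->
  @ex_RInt CR (fun t => v * RtoC (g t))%C a b.
Proof.
  intros H. apply (@ex_RInt_fct_extend_pair R_NormedModule R_NormedModule).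
  - apply (ex_RInt_ext (fun t => fst v * g t)); [intros; unfold Cmult, RtoC; simpl; ring |].
    exact (ex_RInt_scal g a b _ H).
  - apply (ex_RInt_ext (fun t => snd v * g t)); [intros; unfold Cmult, RtoC; simpl; ring |].
    exact (ex_RInt_scal g a b _ H).
Qed.

Lemma RInt_Cscal (v : C) (g : R -> R) a b : ex_RInt g a b ->
  @RInt CR (fun t => v * RtoC (g t))%C a b = (v * RtoC (RInt g a b))%C.
Proof.
  intros H. rewrite RInt_C_pair by (apply ex_RInt_Cscal, H).
  rewrite (RInt_ext (fun t => fst (v * RtoC (g t))%C) (fun t => fst v * g t))
    by (intros; unfold Cmult, RtoC; simpl; ring).
  rewrite (RInt_ext (fun t => snd (v * RtoC (g t))%C) (fun t => snd v * g t))
    by (intros; unfold Cmult, RtoC; simpl; ring).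
  assert (Hs : forall k, RInt (fun t => k * g t) a b = k * RInt g a b) by exact (fun k => RInt_scal g a b k H).
  rewrite !Hs. unfold Cmult, RtoC; simpl. f_equal; ring.
Qed.

Lemma sq_minus_mult_neq_0 x r z : 0 < x < r -> Cmod z <= r -> (RtoC (r * r) - RtoC x * z)%C <> RtoC 0.
Proof.
  intros Hxr Hz E.
  pose proof (Cmod_reverse_triangle (RtoC (r * r)) (RtoC x * z)%C).
  rewrite E, Cmod_0, Cmod_mult, !Cmod_R, (Rabs_right (r * r)), Rabs_right in H by nra.
  pose proof (Cmod_ge_0 z). nra.
Qed.

Definition circle_kernel (x r t : R) : R := / ((r * cos t - x) ^ 2 + (r * sin t) ^ 2).

Lemma circle_kernel_den_pos x r t : 0 < x < r -> 0 < (r * cos t - x) ^ 2 + (r * sin t) ^ 2.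
Proof.
  intros H. pose proof (sin2_cos2 t). unfold Rsqr in H0. pose proof (COS_bound t).
  assert (0 <= r * x * (1 - cos t)) by (apply Rmult_le_pos; nra).
  simpl. nra.
Qed.

Lemma circle_kernel_pos x r t : 0 < x < r -> 0 < circle_kernel x r t.
Proof. intros H. apply Rinv_0_lt_compat, circle_kernel_den_pos, H. Qed.

Lemma circle_kernel_continuous x r t : 0 < x < r -> continuous (circle_kernel x r) t.
Proof.
  intros H. apply (@ex_derive_continuous R_AbsRing R_NormedModule). unfold circle_kernel. auto_derive.
  pose proof (circle_kernel_den_pos x r t H). simpl in H0. lra.
Qed.

Lemma ex_RInt_circle_kernel x r a b : 0 < x < r -> ex_RInt (circle_kernel x r) a b.
Proof. intros H. apply (@ex_RInt_continuous R_CompleteNormedModule). intros; apply circle_kernel_continuous, H. Qed.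

Lemma circle_point x r t : 0 < x < r ->
  let z := cexp (ln r, t) in
  Cmod z = r /\ (z * Cconj z)%C = RtoC (r * r) /\
  ((z - RtoC x) * (Cconj z - RtoC x))%C = RtoC ((r * cos t - x) ^ 2 + (r * sin t) ^ 2).
Proof.
  intros H z.
  assert (Ez : z = ((r * cos t)%R, (r * sin t)%R)) by (unfold z, cexp; simpl; rewrite exp_ln by lra; reflexivity).
  split; [unfold z; rewrite Cmod_cexp; simpl; rewrite exp_ln; lra |].
  pose proof (sin2_cos2 t). unfold Rsqr in H0.
  rewrite Ez. unfold Cconj, Cmult, Cminus, Cplus, Copp, RtoC; simpl. split; f_equal; nra.
Qed.

Lemma Cmod_div_div_le (u p q : C) A P Q : 0 < P -> 0 < Q ->
  Cmod u <= A -> P <= Cmod p -> Q <= Cmod q -> Cmod (u / p / q) <= A / (P * Q).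
Proof.
  intros HP HQ Hu Hp Hq.
  assert (p <> RtoC 0) by (apply Cmod_gt_0; lra). assert (q <> RtoC 0) by (apply Cmod_gt_0; lra).
  rewrite !Cmod_div by auto. pose proof (Cmod_ge_0 u).
  unfold Rdiv. rewrite Rinv_mult, !Rmult_assoc.
  apply Rmult_le_compat; try lra.
  - apply Rmult_le_pos; left; apply Rinv_0_lt_compat; lra.
  - apply Rmult_le_compat; try (left; apply Rinv_0_lt_compat; lra); apply Rinv_le_contravar; lra.
Qed.

Lemma Cmod_cexp_le s t r : 0 < r -> s <= ln r -> Cmod (cexp (s, t)) <= r.
Proof.
  intros Hr Hs. rewrite Cmod_cexp; simpl. rewrite <- (exp_ln r) by exact Hr.
  destruct Hs as [Hs | ->]; [left; apply exp_increasing, Hs | lra].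
Qed.

Section Schwarz.

Variable F : C -> C.
Hypotheses (HF : holo_on_D F) (HFD : forall z, inD z -> inD (F z)) (HF0 : F (RtoC 0) = RtoC 0).

Section Log_polar_kernel.

Variables (x r : R) (lF : C).
Hypotheses (Hxr : 0 < x < r) (Hr1 : r < 1) (HlF : is_Cderive F (RtoC x) lF).

Let N (z : C) : C := (RtoC x * F z - z * F (RtoC x))%C.

(* [N] vanishes at [x], so [K] extends continuously to [ln x], and at [0]
   because [F 0 = 0], so [K] is small far to the left; on the circle [|z| = r]
   the denominator is [r^2 - x z = z (conj z - x)], see [K_on_circle]. *)
Let K (w : C) : C :=
  (diff_quot N (RtoC x) (RtoC x * lF - F (RtoC x)) (cexp w) / (RtoC (r * r) - RtoC x * cexp w))%C.

Lemma N_x : N (RtoC x) = RtoC 0.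
Proof. unfold N. ring. Qed.

Lemma is_Cderive_N z lz : is_Cderive F z lz -> is_Cderive N z (RtoC x * lz - F (RtoC x))%C.
Proof.
  intros H.
  pose proof (is_Cderive_minus _ _ z _ _ (is_Cderive_mult _ _ z _ _ (is_Cderive_const (RtoC x) z) H)
     (is_Cderive_mult _ _ z _ _ (is_Cderive_id z) (is_Cderive_const (F (RtoC x)) z))) as H1.
  cbv beta in H1. replace (RtoC x * lz - F (RtoC x))%C
    with (RtoC 0 * F z + RtoC x * lz - (RtoC 1 * F (RtoC x) + z * RtoC 0))%C by ring.
  exact H1.
Qed.

Lemma N_derivable z : inD z -> exists l, is_Cderive N z l.
Proof. intros Hz. destruct (HF z Hz) as [lz Hlz]. eexists. apply is_Cderive_N, Hlz. Qed.

Lemma K_off_x w : cexp w <> RtoC x ->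
  K w = (N (cexp w) / (cexp w - RtoC x) / (RtoC (r * r) - RtoC x * cexp w))%C.
Proof.
  intros Hw. unfold K, diff_quot. rewrite N_x.
  destruct (Ceq_dec (cexp w) (RtoC x)) as [E | _]; [contradiction |].
  f_equal. f_equal. ring.
Qed.

Lemma K_continuous s t : s <= ln r -> - PI <= t <= PI -> Ccontinuous_at K (s, t).
Proof.
  intros Hs Ht.
  assert (Hm : Cmod (cexp (s, t)) <= r) by (apply Cmod_cexp_le; lra).
  assert (Hden : (RtoC (r * r) - RtoC x * cexp (s, t))%C <> RtoC 0) by (apply sq_minus_mult_neq_0; lra).
  assert (Hexp : Ccontinuous_at cexp (s, t)) by apply (is_Cderive_continuous _ _ _ (is_Cderive_cexp _)).
  apply (Ccontinuous_at_mult (fun w => diff_quot N (RtoC x) (RtoC x * lF - F (RtoC x)) (cexp w))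
    (fun w => / (RtoC (r * r) - RtoC x * cexp w))%C).
  - apply (Ccontinuous_at_comp _ cexp _ Hexp).
    destruct (Ceq_dec (cexp (s, t)) (RtoC x)) as [E | E].
    + rewrite E. apply Ccontinuous_at_diff_quot, is_Cderive_N, HlF.
    + destruct (is_Cderive_diff_quot N (RtoC x) (RtoC x * lF - F (RtoC x))%C _ E) as [l Hl].
      * apply N_derivable. unfold inD. lra.
      * eapply is_Cderive_continuous, Hl.
  - apply Ccontinuous_at_inv; [| exact Hden].
    apply Ccontinuous_at_minus; [apply Ccontinuous_at_const |].
    apply Ccontinuous_at_mult; [apply Ccontinuous_at_const | exact Hexp].
Qed.

Lemma K_derivable s t : s <= ln r -> - PI <= t <= PI -> (s, t) <> (ln x, 0) ->
  exists l, is_Cderive K (s, t) l.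
Proof.
  intros Hs Ht Hst.
  assert (Hm : Cmod (cexp (s, t)) <= r) by (apply Cmod_cexp_le; lra).
  assert (Hx : cexp (s, t) <> RtoC x).
  { intros E. apply cexp_eq_pos_real in E; try lra. destruct E as [-> ->]. auto. }
  destruct (is_Cderive_diff_quot N (RtoC x) (RtoC x * lF - F (RtoC x))%C _ Hx) as [l1 Hl1].
  { apply N_derivable. unfold inD. lra. }
  eexists. apply is_Cderive_div.
  - apply (is_Cderive_comp _ cexp); [exact Hl1 | apply is_Cderive_cexp].
  - apply is_Cderive_minus; [apply is_Cderive_const |].
    apply (is_Cderive_comp (fun z => RtoC x * z)%C cexp); [apply is_Cderive_scal_l | apply is_Cderive_cexp].
  - apply sq_minus_mult_neq_0; lra.
Qed.

(* Goursat on [[s1, ln r] x [-PI, PI]]: the horizontal sides cancel by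
   [2 PI i]-periodicity of [cexp]. *)
Lemma K_circle_integral_shift s1 : s1 < ln x ->
  int_vert K (- PI) PI (ln r) = int_vert K (- PI) PI s1.
Proof.
  intros Hs1. pose proof PI_RGT_0.
  assert (Hlr : ln x < ln r) by (apply ln_increasing; lra).
  assert (H0 : rect_integral K s1 (ln r) (- PI) PI = RtoC 0).
  { apply (goursat_punctured K s1 (ln r) (- PI) PI (ln x) 0); try lra.
    - intros s t Hs Ht. apply K_continuous; lra.
    - intros s t Hs Ht Hn. apply K_derivable; auto; lra. }
  unfold rect_integral in H0.
  replace (int_horiz K s1 (ln r) (- PI)) with (int_horiz K s1 (ln r) PI) in H0.
  2: { apply (@RInt_ext CR). intros t _. unfold K. rewrite cexp_minus_PI. reflexivity. }
  assert (E : (Ci * (int_vert K (- PI) PI (ln r) - int_vert K (- PI) PI s1))%C = RtoC 0)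
    by (rewrite <- H0; ring).
  apply (f_equal Cmod) in E. rewrite Cmod_mult, Cmod_Ci, Cmod_0, Rmult_1_l in E.
  apply Cmod_eq_0 in E. apply (f_equal (fun u => u + int_vert K (- PI) PI s1)%C) in E.
  ring_simplify in E. exact E.
Qed.

Lemma Cmod_N_le z : Cmod (N z) <= x * Cmod (F z) + Cmod z.
Proof.
  unfold N. eapply Rle_trans; [unfold Cminus; apply Cmod_triangle |].
  rewrite Cmod_opp, !Cmod_mult, Cmod_R, Rabs_right by lra.
  assert (Cmod (F (RtoC x)) < 1) by (apply HFD; unfold inD; rewrite Cmod_R, Rabs_right; lra).
  pose proof (Cmod_ge_0 z). nra.
Qed.

Lemma K_small_far_left eps : 0 < eps -> exists s1, s1 < ln x /\ forall t, Cmod (K (s1, t)) <= eps.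
Proof.
  intros Heps.
  destruct (HF (RtoC 0)) as [l0 Hl0]; [unfold inD; rewrite Cmod_0; lra |].
  assert (Hr2 : 0 < r * r) by nra.
  assert (Hexr : 0 < eps * x * (r * r)) by (repeat apply Rmult_lt_0_compat; lra).
  destruct (is_Cderive_continuous _ _ _ Hl0 (eps * (r * r) / 8)) as [d [Hd Hdd]]; [nra |].
  assert (Hrho : exists rho, 0 < rho /\ rho <= x / 2 /\ rho < d /\ rho <= eps * x * (r * r) / 8).
  { exists (Rmin (Rmin (x / 2) (d / 2)) (eps * x * (r * r) / 8)).
    unfold Rmin. repeat destruct Rle_dec; repeat split; lra. }
  destruct Hrho as [rho [Hrho [R1 [R2 R3]]]].
  exists (ln rho). split; [apply ln_increasing; lra |].
  intros t. set (z := cexp (ln rho, t)).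
  assert (Hz : Cmod z = rho) by (unfold z; rewrite Cmod_cexp; simpl; rewrite exp_ln; auto).
  assert (Hzx : z <> RtoC x) by (intros E; rewrite E, Cmod_R, Rabs_right in Hz; lra).
  rewrite K_off_x by exact Hzx. fold z.
  replace eps with (eps * x * (r * r) / 4 / (x / 2 * (r * r / 2))) by (field; lra).
  apply Cmod_div_div_le; try lra.
  - pose proof (Cmod_N_le z).
    assert (Cmod (F z) < eps * (r * r) / 8).
    { replace (F z) with (F z - F (RtoC 0))%C by (rewrite HF0; ring). apply Hdd.
      replace (z - RtoC 0)%C with z by ring. lra. }
    nra.
  - rewrite Cmod_minus_sym. pose proof (Cmod_reverse_triangle (RtoC x) z).
    rewrite Cmod_R, Rabs_right in H by lra. lra.
  - pose proof (Cmod_reverse_triangle (RtoC (r * r)) (RtoC x * z)).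
    rewrite Cmod_mult, !Cmod_R, Rabs_right, (Rabs_right x), Hz in H by nra. nra.
Qed.

Lemma ex_RInt_K_vertical s : s <= ln r -> @ex_RInt CR (fun t => K (s, t)) (- PI) PI.
Proof.
  intros Hs. pose proof PI_RGT_0.
  apply (ex_RInt_vertical K s s); try lra.
  intros u t Hu Ht. apply K_continuous; lra.
Qed.

Lemma K_circle_integral_0 : int_vert K (- PI) PI (ln r) = RtoC 0.
Proof.
  pose proof PI_RGT_0.
  apply (Cmod_le_eps_eq_0 _ (PI - - PI)). intros eps Heps.
  destruct (K_small_far_left eps Heps) as [s1 [Hs1 Hb]].
  assert (Hlr : ln x < ln r) by (apply ln_increasing; lra).
  rewrite (K_circle_integral_shift s1 Hs1).
  apply RInt_Cmod_bound; [lra | apply ex_RInt_K_vertical; lra | auto].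
Qed.

Lemma K_on_circle t :
  K (ln r, t) = ((RtoC x * F (cexp (ln r, t)) / cexp (ln r, t) - F (RtoC x)) * RtoC (circle_kernel x r t))%C.
Proof.
  destruct (circle_point x r t Hxr) as [Hm [E1 E2]].
  set (z := cexp (ln r, t)) in *.
  assert (Hz0 : z <> RtoC 0) by (intros E; rewrite E, Cmod_0 in Hm; lra).
  assert (Hzx : (z - RtoC x)%C <> RtoC 0) by (apply Cminus_eq_contra; intros E; rewrite E, Cmod_R, Rabs_right in Hm; lra).
  pose proof (circle_kernel_den_pos x r t Hxr) as Hd.
  assert (Hzb : (Cconj z - RtoC x)%C <> RtoC 0).
  { intros E. rewrite E, Cmult_0_r in E2. apply RtoC_inj in E2. lra. }
  rewrite K_off_x by (intros E; apply Hzx; unfold z; rewrite E; ring). fold z.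
  unfold circle_kernel, N. rewrite RtoC_inv by lra. rewrite <- E1, <- E2.
  field. repeat split; auto.
  replace (z * Cconj z - RtoC x * z)%C with (z * (Cconj z - RtoC x))%C by ring. apply Cmult_neq_0; auto.
Qed.

Lemma circle_integrand_bound t :
  Cmod (RtoC x * F (cexp (ln r, t)) / cexp (ln r, t) * RtoC (circle_kernel x r t))%C <=
  x / r * circle_kernel x r t.
Proof.
  destruct (circle_point x r t Hxr) as [Hm _].
  assert (Hz0 : cexp (ln r, t) <> RtoC 0) by (intros E; rewrite E, Cmod_0 in Hm; lra).
  pose proof (circle_kernel_pos x r t Hxr).
  assert (Cmod (F (cexp (ln r, t))) < 1) by (apply HFD; unfold inD; lra).
  rewrite Cmod_mult, Cmod_div, Cmod_mult, Hm, !Cmod_R, (Rabs_right x), (Rabs_right (circle_kernel x r t))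
    by (auto; lra).
  replace (x * Cmod (F (cexp (ln r, t))) / r * circle_kernel x r t)
    with (x / r * circle_kernel x r t * Cmod (F (cexp (ln r, t)))) by (field; lra).
  rewrite <- (Rmult_1_r (x / r * circle_kernel x r t)) at 2.
  apply Rmult_le_compat_l; [| lra].
  apply Rmult_le_pos; [apply Rdiv_le_0_compat |]; lra.
Qed.

(* Integrating [K_on_circle]: [F x] times the total mass of the kernel equals
   [x] times a weighted average of [F z / z] over [|z| = r]. *)
Lemma schwarz_circle_bound : Cmod (F (RtoC x)) <= x / r.
Proof.
  pose proof PI_RGT_0.
  set (A := fun t => (RtoC x * F (cexp (ln r, t)) / cexp (ln r, t) * RtoC (circle_kernel x r t))%C).
  set (B := fun t => (F (RtoC x) * RtoC (circle_kernel x r t))%C).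
  set (J := RInt (circle_kernel x r) (- PI) PI).
  assert (HA : forall t, A t = plus (K (ln r, t)) (B t)).
  { intros t. unfold A, B. rewrite K_on_circle. change (plus ?u ?v) with (u + v)%C. ring. }
  assert (HexK := ex_RInt_K_vertical (ln r) (Rle_refl _)).
  assert (HexB : @ex_RInt CR B (- PI) PI) by (apply ex_RInt_Cscal, ex_RInt_circle_kernel, Hxr).
  assert (HexA : @ex_RInt CR A (- PI) PI).
  { apply (@ex_RInt_ext C_R_NormedModule (fun t => plus (K (ln r, t)) (B t))); [intros; symmetry; apply HA |].
    apply (@ex_RInt_plus C_R_NormedModule); auto. }
  assert (EA : @RInt CR A (- PI) PI = (F (RtoC x) * RtoC J)%C).
  { rewrite (@RInt_ext CR A (fun t => plus (K (ln r, t)) (B t))) by (intros; apply HA).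
    rewrite (@RInt_plus CR (fun t => K (ln r, t)) B) by auto.
    change (@RInt CR (fun t => K (ln r, t)) (- PI) PI) with (int_vert K (- PI) PI (ln r)).
    rewrite K_circle_integral_0. unfold B. rewrite RInt_Cscal by (apply ex_RInt_circle_kernel, Hxr).
    exact (Cplus_0_l (F (RtoC x) * RtoC J)%C). }
  assert (HJ : 0 < J).
  { apply RInt_gt_0; [lra | intros; apply circle_kernel_pos, Hxr | intros; apply circle_kernel_continuous, Hxr]. }
  assert (Hb : Cmod (@RInt CR A (- PI) PI) <= x / r * J).
  { rewrite <- norm_CR. unfold J. rewrite <- (RInt_scal (circle_kernel x r)) by (apply ex_RInt_circle_kernel, Hxr).
    apply (@norm_RInt_le C_R_NormedModule A (fun t => scal (x / r) (circle_kernel x r t)) (- PI) PI); [lra | | |].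
    - intros t _. rewrite norm_CR. apply circle_integrand_bound.
    - apply (@RInt_correct CR), HexA.
    - apply (@RInt_correct R_CompleteNormedModule).
      exact (ex_RInt_scal _ _ _ (x / r) (ex_RInt_circle_kernel x r _ _ Hxr)). }
  rewrite EA, Cmod_mult, Cmod_R, Rabs_right in Hb by lra.
  apply Rmult_le_reg_r with J; auto.
Qed.

End Log_polar_kernel.

Lemma schwarz_real x : 0 < x < 1 -> Cmod (F (RtoC x)) <= x.
Proof.
  intros Hx.
  destruct (HF (RtoC x)) as [lF HlF]; [unfold inD; rewrite Cmod_R, Rabs_right; lra |].
  apply Rnot_lt_le. intros Hc.
  assert (HFx : Cmod (F (RtoC x)) < 1) by (apply HFD; unfold inD; rewrite Cmod_R, Rabs_right; lra).
  set (r := (Rmax x (x / Cmod (F (RtoC x))) + 1) / 2).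
  assert (x / Cmod (F (RtoC x)) < 1) by (apply Rmult_lt_reg_r with (Cmod (F (RtoC x))); [lra |];
    unfold Rdiv; rewrite Rmult_assoc, Rinv_l, Rmult_1_r, Rmult_1_l by lra; lra).
  assert (Hr1 : x < r) by (unfold r; pose proof (Rmax_l x (x / Cmod (F (RtoC x)))); lra).
  assert (Hr2 : r < 1) by (unfold r; apply Rmax_case_strong; intros; lra).
  assert (Hr3 : x / Cmod (F (RtoC x)) < r) by (unfold r; pose proof (Rmax_r x (x / Cmod (F (RtoC x)))); lra).
  pose proof (schwarz_circle_bound x r lF ltac:(lra) Hr2 HlF) as Hb.
  apply (Rmult_lt_compat_l (Cmod (F (RtoC x)))) in Hr3; [| lra].
  replace (Cmod (F (RtoC x)) * (x / Cmod (F (RtoC x)))) with x in Hr3 by (field; lra).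
  apply (Rmult_le_compat_r r) in Hb; [| lra]. replace (x / r * r) with x in Hb by (field; lra).
  lra.
Qed.

End Schwarz.

Theorem schwarz F : holo_on_D F -> (forall z, inD z -> inD (F z)) -> F (RtoC 0) = RtoC 0 ->
  forall z, inD z -> Cmod (F z) <= Cmod z.
Proof.
  intros HF HFD H0 z Hz.
  destruct (Ceq_dec z (RtoC 0)) as [-> | Hz0]; [rewrite H0, Cmod_0; lra |].
  assert (Hx : 0 < Cmod z) by (apply Cmod_gt_0; auto).
  assert (Hxn : RtoC (Cmod z) <> RtoC 0) by (intros E; apply RtoC_inj in E; lra).
  set (lam := (z / RtoC (Cmod z))%C).
  assert (Hlam : Cmod lam = 1) by (unfold lam; rewrite Cmod_div, Cmod_R, Rabs_right by (auto; lra); field; lra).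
  assert (Hrot : forall w, inD w -> inD (lam * w)%C) by (intros w Hw; unfold inD in *; rewrite Cmod_mult, Hlam; lra).
  replace (F z) with (F (lam * RtoC (Cmod z))%C) by (f_equal; unfold lam; field; auto).
  apply (schwarz_real (fun w => F (lam * w)%C)); [| auto | rewrite Cmult_0_r; auto | unfold inD in Hz; lra].
  intros w Hw. destruct (HF (lam * w)%C (Hrot w Hw)) as [l Hl].
  eexists. apply (is_Cderive_comp F (fun w => lam * w)%C w); [exact Hl | apply is_Cderive_scal_l].
Qed.

(** * Automorphisms of the disc *)

Definition sqnorm (z : C) : R := fst z * fst z + snd z * snd z.

Lemma sqnorm_nonneg z : 0 <= sqnorm z.
Proof. unfold sqnorm; nra. Qed.

Lemma Cmod_sqnorm z : Cmod z = sqrt (sqnorm z).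
Proof. unfold Cmod, sqnorm. f_equal. simpl. ring. Qed.

Lemma Cmod_mult_self z : Cmod z * Cmod z = sqnorm z.
Proof. rewrite Cmod_sqnorm. apply sqrt_sqrt, sqnorm_nonneg. Qed.

Lemma Cmod_lt_sqnorm u v : sqnorm u < sqnorm v -> Cmod u < Cmod v.
Proof. intros H. rewrite !Cmod_sqnorm. apply sqrt_lt_1_alt. split; [apply sqnorm_nonneg | exact H]. Qed.

Definition mobius (b z : C) : C := ((z - b) / (1 - Cconj b * z))%C.

Lemma mobius_den_neq_0 b z : inD b -> inD z -> (1 - Cconj b * z)%C <> RtoC 0.
Proof.
  intros Hb Hz E. pose proof (Cmod_reverse_triangle (RtoC 1) (Cconj b * z)%C).
  rewrite E, Cmod_0, Cmod_mult, Cmod_conj, Cmod_R, Rabs_R1 in H.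
  unfold inD in *. pose proof (Cmod_ge_0 b). pose proof (Cmod_ge_0 z). nra.
Qed.

(* [|1 - conj b z|^2 - |z - b|^2 = (1 - |b|^2) (1 - |z|^2)]. *)
Lemma mobius_in_D b z : inD b -> inD z -> inD (mobius b z).
Proof.
  intros Hb Hz. pose proof (mobius_den_neq_0 b z Hb Hz) as Hd.
  assert (0 < Cmod (1 - Cconj b * z)%C) by (apply Cmod_gt_0; auto).
  unfold inD, mobius. rewrite Cmod_div by auto.
  apply Rmult_lt_reg_r with (Cmod (1 - Cconj b * z)%C); auto.
  unfold Rdiv. rewrite Rmult_assoc, Rinv_l, Rmult_1_r, Rmult_1_l by lra.
  apply Cmod_lt_sqnorm. unfold inD in Hb, Hz.
  assert (sqnorm b < 1) by (rewrite <- Cmod_mult_self; pose proof (Cmod_ge_0 b); nra).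
  assert (sqnorm z < 1) by (rewrite <- Cmod_mult_self; pose proof (Cmod_ge_0 z); nra).
  destruct b as [b1 b2], z as [z1 z2]. unfold sqnorm in *; simpl in *. nra.
Qed.

Lemma inD_opp b : inD b -> inD (- b)%C.
Proof. unfold inD. rewrite Cmod_opp. auto. Qed.

Lemma mobius_K b z : inD b -> inD z -> mobius (- b) (mobius b z) = z.
Proof.
  intros Hb Hz. pose proof (mobius_den_neq_0 b z Hb Hz) as Hd.
  pose proof (mobius_den_neq_0 b b Hb Hb) as Hbb.
  unfold mobius. rewrite Copp_conj.
  field. split; [exact Hd |].
  replace (RtoC 1 - Cconj b * z - - Cconj b * (z - b))%C with (1 - Cconj b * b)%C by ring. exact Hbb.
Qed.

Lemma mobius_K_opp b z : inD b -> inD z -> mobius b (mobius (- b) z) = z.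
Proof.
  intros Hb Hz. pose proof (mobius_K (- b) z (inD_opp b Hb) Hz) as H.
  replace (- - b)%C with b in H by ring. exact H.
Qed.

Lemma mobius_self b : mobius b b = RtoC 0.
Proof. unfold mobius, Cdiv. replace (b - b)%C with (RtoC 0) by ring. ring. Qed.

Lemma mobius_0 b : mobius (- b) (RtoC 0) = b.
Proof.
  unfold mobius. replace (RtoC 1 - Cconj (- b) * RtoC 0)%C with (RtoC 1) by ring.
  replace (RtoC 0 - - b)%C with b by ring. field.
Qed.

Lemma is_Cderive_mobius b z : inD b -> inD z -> exists l, is_Cderive (mobius b) z l.
Proof.
  intros Hb Hz. eexists. unfold mobius. apply is_Cderive_div.
  - apply is_Cderive_minus; [apply is_Cderive_id | apply is_Cderive_const].
  - apply is_Cderive_minus; [apply is_Cderive_const | apply is_Cderive_scal_l].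
  - apply mobius_den_neq_0; auto.
Qed.

Lemma holo_on_D_comp f g : holo_on_D f -> holo_on_D g -> (forall z, inD z -> inD (g z)) ->
  holo_on_D (fun z => f (g z)).
Proof.
  intros Hf Hg HgD z Hz. destruct (Hg z Hz) as [lg Hlg]. destruct (Hf (g z) (HgD z Hz)) as [lf Hlf].
  eexists. apply (is_Cderive_comp f g z _ _ Hlf Hlg).
Qed.

Lemma holo_on_D_mobius b : inD b -> holo_on_D (mobius b).
Proof. intros Hb z Hz. apply is_Cderive_mobius; auto. Qed.

Lemma AutD_mobius_rotation v lam : inD v -> Cmod lam = 1 -> AutD (fun z => mobius (- v) (lam * z))%C.
Proof.
  intros Hv Hl.
  assert (Hl0 : lam <> RtoC 0) by (intros E; rewrite E, Cmod_0 in Hl; lra).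
  assert (Hrot : forall z, inD z -> inD (lam * z)%C) by (intros z Hz; unfold inD in *; rewrite Cmod_mult, Hl; lra).
  assert (Hrot_holo : holo_on_D (fun z => lam * z)%C) by (intros z _; eexists; apply is_Cderive_scal_l).
  split; [| split].
  - apply holo_on_D_comp; auto. apply holo_on_D_mobius, inD_opp, Hv.
  - intros z Hz. apply mobius_in_D; [apply inD_opp |]; auto.
  - exists (fun w => mobius v w / lam)%C. split; [| split; [| split]].
    + intros w Hw. destruct (is_Cderive_mobius v w Hv Hw) as [l Hl'].
      eexists. apply is_Cderive_div; [exact Hl' | apply is_Cderive_const | auto].
    + intros w Hw. unfold inD. rewrite Cmod_div, Hl by auto. unfold Rdiv. rewrite Rinv_1, Rmult_1_r.
      apply mobius_in_D; auto.
    + intros z Hz. rewrite mobius_K_opp by auto. field. auto.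
    + intros w Hw. replace (lam * (mobius v w / lam))%C with (mobius v w) by (field; auto).
      apply mobius_K; auto.
Qed.

Lemma AutD_mobius_invariant phi a : AutD phi -> 0 <= a < 1 ->
  Cmod (mobius (phi (RtoC 0)) (phi (RtoC a))) = a.
Proof.
  intros [Hh [HD [psi [Hpsi [HpsiD [Hinv Hr]]]]]] Ha.
  set (b := phi (RtoC 0)).
  assert (H0 : inD (RtoC 0)) by (unfold inD; rewrite Cmod_0; lra).
  assert (Ha' : inD (RtoC a)) by (unfold inD; rewrite Cmod_R, Rabs_right; lra).
  assert (Hb : inD b) by (apply HD, H0).
  apply Rle_antisym.
  - pose proof (schwarz (fun z => mobius b (phi z)) (holo_on_D_comp _ _ (holo_on_D_mobius b Hb) Hh HD)
      (fun z Hz => mobius_in_D b _ Hb (HD z Hz)) (mobius_self b) (RtoC a) Ha') as H.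
    rewrite Cmod_R, Rabs_right in H by lra. exact H.
  - assert (Hmb : inD (- b)%C) by (apply inD_opp, Hb).
    pose proof (schwarz (fun w => psi (mobius (- b) w))
      (holo_on_D_comp _ _ Hpsi (holo_on_D_mobius _ Hmb) (fun w Hw => mobius_in_D _ _ Hmb Hw))
      (fun w Hw => HpsiD _ (mobius_in_D _ _ Hmb Hw))
      ltac:(cbv beta; rewrite mobius_0; apply Hinv, H0)
      (mobius b (phi (RtoC a))) (mobius_in_D _ _ Hb (HD _ Ha'))) as H.
    cbv beta in H. rewrite mobius_K, Hinv, Cmod_R, Rabs_right in H by (auto; lra). exact H.
Qed.

Lemma polar_form (w : C) (a : R) : 0 <= a -> Cmod w = a -> exists th, w = ((a * cos th)%R, (a * sin th)%R).
Proof.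
  intros Ha Hw. destruct (Req_dec a 0) as [-> | Ha0].
  - exists 0. apply Cmod_eq_0 in Hw. rewrite Hw. unfold RtoC. f_equal; ring.
  - assert (Hn : sqnorm w = a * a) by (rewrite <- Cmod_mult_self, Hw; ring).
    destruct w as [w1 w2]. unfold sqnorm in Hn; simpl in Hn.
    set (c := w1 / a). set (d := w2 / a).
    assert (Hcd : c * c + d * d = 1).
    { unfold c, d. replace (w1 / a * (w1 / a) + w2 / a * (w2 / a)) with ((w1 * w1 + w2 * w2) / (a * a)) by (field; lra).
      rewrite Hn. field. lra. }
    assert (Hc : -1 <= c <= 1) by nra.
    assert (Hs : sqrt (1 - c²) = Rabs d).
    { replace (1 - c²) with (d²) by (unfold Rsqr; lra). apply sqrt_Rsqr_abs. }
    destruct (Rle_or_lt 0 d) as [Hd | Hd].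
    + exists (acos c). rewrite cos_acos, sin_acos, Hs, Rabs_right by (auto; lra).
      unfold c, d. f_equal; field; lra.
    + exists (- acos c). rewrite cos_neg, sin_neg, cos_acos, sin_acos, Hs, Rabs_left by (auto; lra).
      unfold c, d. f_equal; field; lra.
Qed.

Lemma sym_pair_a0 (a : R) z1 z2 : ((z1 + z2)%C, (z1 * z2)%C) = (RtoC a, RtoC 0) ->
  (z1 = RtoC 0 /\ z2 = RtoC a) \/ (z1 = RtoC a /\ z2 = RtoC 0).
Proof.
  intros E. pose proof (f_equal fst E) as Es. pose proof (f_equal snd E) as Ep. simpl in Es, Ep.
  apply (f_equal Cmod) in Ep. rewrite Cmod_0, Cmod_mult in Ep.
  destruct (Rmult_integral _ _ Ep) as [E0 | E0]; apply Cmod_eq_0 in E0; subst.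
  - left. split; auto. rewrite <- Es. ring.
  - right. split; auto. rewrite <- Es. ring.
Qed.

Theorem orbit_a0_iff a y : 0 <= a < 1 ->
  (orbit_a0 a y <-> exists u v, inD u /\ inD v /\ Cmod (mobius v u) = a /\ y = ((u + v)%C, (u * v)%C)).
Proof.
  intros Ha.
  assert (H0 : inD (RtoC 0)) by (unfold inD; rewrite Cmod_0; lra).
  assert (Ha' : inD (RtoC a)) by (unfold inD; rewrite Cmod_R, Rabs_right; lra).
  split.
  - intros [phi [Haut [z1 [z2 [_ [_ [Ex ->]]]]]]].
    pose proof Haut as [_ [HD _]].
    exists (phi (RtoC a)), (phi (RtoC 0)).
    split; [auto | split; [auto | split; [apply AutD_mobius_invariant; auto |]]].
    destruct (sym_pair_a0 a z1 z2 (eq_sym Ex)) as [[-> ->] | [-> ->]]; f_equal; ring.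
  - intros [u [v [Hu [Hv [Hr ->]]]]].
    destruct (polar_form (mobius v u) a (proj1 Ha) Hr) as [th Hth].
    set (lam := (cos th, sin th)).
    assert (Hlam : Cmod lam = 1).
    { unfold lam. rewrite Cmod_pair, <- (sqrt_1). f_equal. pose proof (sin2_cos2 th). unfold Rsqr in *. lra. }
    exists (fun z => mobius (- v) (lam * z))%C. split; [apply AutD_mobius_rotation; auto |].
    exists (RtoC a), (RtoC 0). split; [exact Ha' | split; [exact H0 | split; [f_equal; ring |]]].
    cbv beta. replace (lam * RtoC a)%C with (mobius v u) by (rewrite Hth; unfold lam, RtoC, Cmult; simpl; f_equal; ring).
    rewrite mobius_K, Cmult_0_r, mobius_0 by auto. reflexivity.
Qed.

(** * Closedness of the orbit *)

Section Real_continuity.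

Context {U : UniformSpace}.

Lemma continuous_Rplus (f g : U -> R) y : continuous f y -> continuous g y -> continuous (fun z => f z + g z) y.
Proof. apply (@continuous_plus U R_AbsRing R_NormedModule). Qed.

Lemma continuous_Rmult (f g : U -> R) y : continuous f y -> continuous g y -> continuous (fun z => f z * g z) y.
Proof. apply (@continuous_mult U R_AbsRing). Qed.

Lemma continuous_Rminus (f g : U -> R) y : continuous f y -> continuous g y -> continuous (fun z => f z - g z) y.
Proof.
  intros Hf Hg. apply continuous_Rplus; [exact Hf |].
  apply (@continuous_opp U R_AbsRing R_NormedModule), Hg.
Qed.

Lemma continuous_Rsqrt (f : U -> R) y : continuous f y -> continuous (fun z => sqrt (f z)) y.
Proof. intros Hf. apply (continuous_comp f sqrt); [exact Hf | apply continuous_sqrt]. Qed.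

End Real_continuity.

Ltac solve_continuous :=
  repeat match goal with
  | |- continuous (fun z => @?f z - @?g z) _ => apply (continuous_Rminus f g)
  | |- continuous (fun z => @?f z + @?g z) _ => apply (continuous_Rplus f g)
  | |- continuous (fun z => @?f z * @?g z) _ => apply (continuous_Rmult f g)
  | |- continuous (fun z => sqrt (@?f z)) _ => apply (continuous_Rsqrt f)
  | |- continuous (fun _ => ?c) _ => apply continuous_const
  | H : continuous ?f ?y |- continuous ?f ?y => exact H
  end.

Lemma continuous_C2_coords (y : C2) :
  continuous (fun z : C2 => fst (fst z)) y /\ continuous (fun z : C2 => snd (fst z)) y /\
  continuous (fun z : C2 => fst (snd z)) y /\ continuous (fun z : C2 => snd (snd z)) y.
Proof.
  destruct y as [[s1 s2] [p1 p2]].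
  repeat split.
  - apply (continuous_comp (fun z : C2 => fst z) (fun w : C_UniformSpace => fst w));
      [apply continuous_fst | exact (@continuous_fst R_UniformSpace R_UniformSpace s1 s2)].
  - apply (continuous_comp (fun z : C2 => fst z) (fun w : C_UniformSpace => snd w));
      [apply continuous_fst | exact (@continuous_snd R_UniformSpace R_UniformSpace s1 s2)].
  - apply (continuous_comp (fun z : C2 => snd z) (fun w : C_UniformSpace => fst w));
      [apply continuous_snd | exact (@continuous_fst R_UniformSpace R_UniformSpace p1 p2)].
  - apply (continuous_comp (fun z : C2 => snd z) (fun w : C_UniformSpace => snd w));
      [apply continuous_snd | exact (@continuous_snd R_UniformSpace R_UniformSpace p1 p2)].
Qed.

(* [|s^2 - 4 p|^2] in coordinates; for [(s, p) = (u + v, u v)] it is [|u - v|^4]. *)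
Definition discriminant_sqnorm (y : C2) : R :=
  let s1 := fst (fst y) in let s2 := snd (fst y) in let p1 := fst (snd y) in let p2 := snd (snd y) in
  (s1 * s1 - s2 * s2 - 4 * p1) * (s1 * s1 - s2 * s2 - 4 * p1) + (2 * s1 * s2 - 4 * p2) * (2 * s1 * s2 - 4 * p2).

(* [|u - v|^2 - a^2 |1 - conj v u|^2] as a function of [(u + v, u v)], using
   [|1 - conj v u|^2 = 1 - (|u + v|^2 - |u - v|^2) / 2 + |u v|^2]. *)
Definition orbit_equation (a : R) (y : C2) : R :=
  let s1 := fst (fst y) in let s2 := snd (fst y) in let p1 := fst (snd y) in let p2 := snd (snd y) in
  sqrt (discriminant_sqnorm y) -
  a * a * (1 - (s1 * s1 + s2 * s2 - sqrt (discriminant_sqnorm y)) / 2 + (p1 * p1 + p2 * p2)).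

Lemma orbit_equation_continuous a y : continuous (orbit_equation a) y.
Proof.
  destruct (continuous_C2_coords y) as [H1 [H2 [H3 H4]]].
  unfold orbit_equation, discriminant_sqnorm, Rdiv. cbv zeta. solve_continuous.
Qed.

Lemma orbit_equation_closed a : closed (fun y : C2 => orbit_equation a y = 0).
Proof.
  apply (closed_comp (orbit_equation a) (fun t : R => t = 0)).
  - intros y. apply orbit_equation_continuous.
  - apply closed_eq.
Qed.

Lemma orbit_equation_sym a u v :
  orbit_equation a ((u + v)%C, (u * v)%C) = sqnorm (u - v)%C - a * a * sqnorm (1 - Cconj v * u)%C.
Proof.
  assert (HQ : discriminant_sqnorm ((u + v)%C, (u * v)%C) = sqnorm (u - v)%C * sqnorm (u - v)%C).
  { destruct u as [u1 u2], v as [v1 v2]. unfold discriminant_sqnorm, sqnorm, Cplus, Cmult, Cminus, Copp; simpl. ring. }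
  unfold orbit_equation. rewrite HQ, sqrt_square by apply sqnorm_nonneg.
  destruct u as [u1 u2], v as [v1 v2]. unfold sqnorm, Cplus, Cmult, Cminus, Copp, Cconj, RtoC; simpl. lra.
Qed.

Lemma Cmod_mobius_eq u v a : inD u -> inD v -> 0 <= a ->
  (Cmod (mobius v u) = a <-> sqnorm (u - v)%C = a * a * sqnorm (1 - Cconj v * u)%C).
Proof.
  intros Hu Hv Ha. pose proof (mobius_den_neq_0 v u Hv Hu) as Hd.
  assert (HD : 0 < Cmod (1 - Cconj v * u)%C) by (apply Cmod_gt_0; auto).
  unfold mobius. rewrite Cmod_div by auto. split; intros H.
  - rewrite <- !Cmod_mult_self, <- H. field. lra.
  - assert (Cmod (u - v)%C = a * Cmod (1 - Cconj v * u)%C).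
    { rewrite !Cmod_sqnorm, H, sqrt_mult_alt, sqrt_square by nra. reflexivity. }
    rewrite H0. field. lra.
Qed.

Theorem orbit_a0_closed a : 0 <= a < 1 -> rel_closed_in_G (orbit_a0 a).
Proof.
  intros Ha. split.
  - intros y Hy. apply orbit_a0_iff in Hy; auto. destruct Hy as [u [v [Hu [Hv [_ ->]]]]].
    exists u, v. auto.
  - exists (fun y : C2 => orbit_equation a y = 0). split; [apply orbit_equation_closed |].
    intros y. rewrite orbit_a0_iff by auto. split.
    + intros [u [v [Hu [Hv [Hr ->]]]]]. split.
      * rewrite orbit_equation_sym. apply (Cmod_mobius_eq u v a Hu Hv (proj1 Ha)) in Hr. lra.
      * exists u, v. auto.
    + intros [HP [z1 [z2 [H1 [H2 ->]]]]]. exists z1, z2. repeat split; auto.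
      apply Cmod_mobius_eq; auto; [lra |]. rewrite orbit_equation_sym in HP. lra.
Qed.

(** * Path-connectedness of the orbit *)

Lemma inD_convex v1 v2 t : inD v1 -> inD v2 -> 0 <= t <= 1 -> inD (v1 + RtoC t * (v2 - v1))%C.
Proof.
  unfold inD. intros H1 H2 Ht.
  replace (v1 + RtoC t * (v2 - v1))%C with (RtoC (1 - t) * v1 + RtoC t * v2)%C
    by (unfold RtoC, Cmult, Cminus, Cplus, Copp; simpl; f_equal; ring).
  eapply Rle_lt_trans; [apply Cmod_triangle |].
  rewrite !Cmod_mult, !Cmod_R, Rabs_right, (Rabs_right t) by lra.
  destruct (Rle_lt_dec t 0); [nra |].
  assert ((1 - t) * Cmod v1 <= (1 - t) * 1) by (apply Rmult_le_compat_l; lra).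
  assert (t * Cmod v2 < t * 1) by (apply Rmult_lt_compat_l; lra).
  lra.
Qed.

Lemma Ccontinuous_at_Re_affine (p q z : C) : Ccontinuous_at (fun w => p + RtoC (fst w) * q)%C z.
Proof.
  intros e He. pose proof (Cmod_ge_0 q).
  exists (e / (Cmod q + 1)). split; [apply Rdiv_lt_0_compat; lra |].
  intros w Hw. replace (p + RtoC (fst w) * q - (p + RtoC (fst z) * q))%C with (RtoC (fst (w - z)%C) * q)%C
    by (unfold RtoC, Cmult, Cminus, Cplus, Copp; simpl; f_equal; ring).
  rewrite Cmod_mult, Cmod_R.
  pose proof (re_le_Cmod (w - z)%C). pose proof (Rabs_pos (fst (w - z)%C)).
  assert (E : e / (Cmod q + 1) * (Cmod q + 1) = e) by (field; lra).
  unfold Re in *. nra.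
Qed.

Lemma Ccontinuous_at_mobius (B W : C -> C) z : Ccontinuous_at B z -> Ccontinuous_at W z ->
  inD (B z) -> inD (W z) -> Ccontinuous_at (fun w => mobius (B w) (W w)) z.
Proof.
  intros HB HW HBz HWz. unfold mobius.
  apply Ccontinuous_at_mult; [apply Ccontinuous_at_minus; auto |].
  apply Ccontinuous_at_inv; [| apply mobius_den_neq_0; auto].
  apply Ccontinuous_at_minus; [apply Ccontinuous_at_const |].
  apply Ccontinuous_at_mult; [apply Ccontinuous_at_conj |]; auto.
Qed.

Lemma ball_C_of_Cmod (x y : C) (eps : posreal) : Cmod (y - x)%C < eps -> @ball C_UniformSpace x eps y.
Proof.
  intros H. pose proof (re_le_Cmod (y - x)%C). pose proof (snd_le_Cmod (y - x)%C). unfold Re in *. simpl in *.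
  split.
  - change (Rabs (fst y - fst x) < eps). unfold Rminus. lra.
  - change (Rabs (snd y - snd x) < eps). unfold Rminus. lra.
Qed.

Lemma filterlim_pair_path (A B : C -> C) (D : R -> Prop) t :
  Ccontinuous_at A (RtoC t) -> Ccontinuous_at B (RtoC t) ->
  filterlim (fun s : R => ((A (RtoC s), B (RtoC s)) : C2)) (within D (locally t))
    (locally ((A (RtoC t), B (RtoC t)) : C2)).
Proof.
  intros HA HB. eapply filterlim_filter_le_1; [apply filter_le_within |].
  intros P [eps HP].
  destruct (HA eps (cond_pos eps)) as [d1 [Hd1 H1]]. destruct (HB eps (cond_pos eps)) as [d2 [Hd2 H2]].
  exists (mkposreal _ (Rmin_pos _ _ Hd1 Hd2)). intros s Hs. apply HP.
  assert (Hst : Cmod (RtoC s - RtoC t)%C < Rmin d1 d2) by (rewrite <- RtoC_minus, Cmod_R; exact Hs).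
  split; apply ball_C_of_Cmod.
  - apply H1. eapply Rlt_le_trans; [exact Hst | apply Rmin_l].
  - apply H2. eapply Rlt_le_trans; [exact Hst | apply Rmin_r].
Qed.

Definition arc (a th1 th2 : R) (z : C) : C :=
  (RtoC a * cexp ((0, th1) + RtoC (fst z) * (0, (th2 - th1)%R)))%C.

Lemma Cmod_arc a th1 th2 z : 0 <= a -> Cmod (arc a th1 th2 z) = a.
Proof.
  intros Ha. unfold arc. rewrite Cmod_mult, Cmod_R, Rabs_right, Cmod_cexp by lra. simpl.
  replace (exp _) with 1 by (rewrite <- exp_0; f_equal; ring). ring.
Qed.

Lemma arc_endpoints a th1 th2 :
  arc a th1 th2 (RtoC 0) = ((a * cos th1)%R, (a * sin th1)%R) /\
  arc a th1 th2 (RtoC 1) = ((a * cos th2)%R, (a * sin th2)%R).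
Proof.
  unfold arc, cexp, RtoC, Cmult, Cplus; simpl.
  split; replace (exp _) with 1 by (rewrite <- exp_0; f_equal; ring).
  - replace (th1 + _) with th1 by ring. f_equal; ring.
  - replace (th1 + _) with th2 by ring. f_equal; ring.
Qed.

Lemma Ccontinuous_at_arc a th1 th2 z : Ccontinuous_at (arc a th1 th2) z.
Proof.
  apply Ccontinuous_at_mult; [apply Ccontinuous_at_const |].
  apply (Ccontinuous_at_comp cexp); [apply Ccontinuous_at_Re_affine |].
  eapply is_Cderive_continuous, is_Cderive_cexp.
Qed.

Theorem orbit_a0_path_connected a : 0 <= a < 1 -> path_connected (orbit_a0 a).
Proof.
  intros Ha y1 y2 Hy1 Hy2.
  apply orbit_a0_iff in Hy1, Hy2; auto.
  destruct Hy1 as [u1 [v1 [Hu1 [Hv1 [Hr1 ->]]]]]. destruct Hy2 as [u2 [v2 [Hu2 [Hv2 [Hr2 ->]]]]].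
  destruct (polar_form (mobius v1 u1) a (proj1 Ha) Hr1) as [th1 Hth1].
  destruct (polar_form (mobius v2 u2) a (proj1 Ha) Hr2) as [th2 Hth2].
  destruct (arc_endpoints a th1 th2) as [HW0 HW1]. rewrite <- Hth1 in HW0. rewrite <- Hth2 in HW1.
  set (V := fun z : C => (v1 + RtoC (fst z) * (v2 - v1))%C).
  set (W := arc a th1 th2).
  set (U := fun z : C => mobius (- V z) (W z)).
  assert (HV : forall t, 0 <= t <= 1 -> inD (V (RtoC t))) by (intros t Ht; apply inD_convex; auto).
  assert (HWD : forall z, inD (W z)) by (intros z; unfold inD, W; rewrite Cmod_arc; lra).
  exists (fun s : R => ((U (RtoC s) + V (RtoC s))%C, (U (RtoC s) * V (RtoC s))%C)).
  split; [| split; [| split]].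
  - intros t Ht.
    assert (HcV : Ccontinuous_at V (RtoC t)) by apply Ccontinuous_at_Re_affine.
    assert (HcU : Ccontinuous_at U (RtoC t)).
    { apply Ccontinuous_at_mobius; auto.
      - apply Ccontinuous_at_opp, HcV.
      - apply Ccontinuous_at_arc.
      - apply inD_opp, HV, Ht. }
    apply (filterlim_pair_path (fun z => U z + V z)%C (fun z => U z * V z)%C);
      [apply Ccontinuous_at_plus | apply Ccontinuous_at_mult]; auto.
  - intros t Ht. apply orbit_a0_iff; auto.
    exists (U (RtoC t)), (V (RtoC t)). split; [| split; [| split]]; auto.
    + apply mobius_in_D; [apply inD_opp |]; auto.
    + unfold U, W. rewrite mobius_K_opp, Cmod_arc by (auto; lra). reflexivity.
  - unfold U, W. replace (V (RtoC 0)) with v1 by (unfold V; simpl; ring). rewrite HW0, mobius_K by auto. reflexivity.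
  - unfold U, W. replace (V (RtoC 1)) with v2 by (unfold V; simpl; ring). rewrite HW1, mobius_K by auto. reflexivity.
Qed.

Theorem lemma2p2 (a : R) (ha : 0 <= a < 1) :
  rel_closed_in_G (orbit_a0 a) /\ path_connected (orbit_a0 a).
Proof. split; [apply orbit_a0_closed | apply orbit_a0_path_connected]; exact ha. Qed.
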